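(* Let $\theta:[0,T]\times\Omega\to\mathbb R^3$ be a (sufficiently smooth) solution on $[0,T]$ of \[ w^\alpha\mu^{3\gamma-3}\Big(\partial_{\tau\tau}\theta_i+\tfrac{\mu_\tau}{\mu}\partial_\tau\theta_i+2\Gamma^*_{ij}\partial_\tau\theta_j\Big)+\delta w^\alpha\Lambda_{i\ell}\theta_\ell+\Big(w^{1+\alpha}\Lambda_{ij}\big(\mathscr A^k_j\mathscr J^{-1/\alpha}-\delta^k_j\big)\Big)_{,k}=0, \] with $\mathbf V=\partial_\tau\theta$. Then for every $\tau\in[0,T]$, \[ \mathrm{Curl}_{\Lambda\mathscr A}\mathbf V(\tau)=\frac{\mu(0)\mathrm{Curl}_{\Lambda\mathscr A}\mathbf V(0)}{\mu(\tau)}+\frac1{\mu(\tau)}\int_0^\tau\mu[\partial_\tau,\mathrm{Curl}_{\Lambda\mathscr A}]\mathbf V\,d\tau'-\frac2{\mu(\tau)}\int_0^\tau\mu\,\mathrm{Curl}_{\Lambda\mathscr A}(\Gamma^*\mathbf V)\,d\tau' \] and \begin{align*} \mathrm{Curl}_{\Lambda\mathscr A}\theta(\tau)&=\mathrm{Curl}_{\Lambda\mathscr A}\theta(0)+\mu(0)\mathrm{Curl}_{\Lambda\mathscr A}\mathbf V(0)\int_0^\tau\frac{d\tau'}{\mu(\tau')}+\int_0^\tau[\partial_\tau,\mathrm{Curl}_{\Lambda\mathscr A}]\theta(\tau')\,d\tau'\\ &\quad+\int_0^\tau\frac1{\mu(\tau')}\int_0^{\tau'}\mu(\tau'')[\partial_\tau,\mathrm{Curl}_{\Lambda\mathscr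 A}]\mathbf V\,d\tau''d\tau'-\int_0^\tau\frac2{\mu(\tau')}\int_0^{\tau'}\mu(\tau'')\mathrm{Curl}_{\Lambda\mathscr A}(\Gamma^*\mathbf V)\,d\tau''d\tau'. \end{align*}
   Context: Fix $\gamma>1$, $\alpha=\frac1{\gamma-1}$, $\delta>0$, $(A_0,A_1)\in\mathrm{GL}^+(3)\times\mathbb M^{3\times3}$; $A(t)\in\mathrm{GL}^+(3)$ is the global solution of $A''=\delta(\det A)^{1-\gamma}A^{-\top}$, $A(0)=A_0$, $A'(0)=A_1$. $\mu=(\det A)^{1/3}$, $O=A/\mu$, time $\tau$ given by $d\tau/dt=1/\mu$, $\tau(0)=0$; $\Lambda=(\det A)^{2/3}A^{-1}A^{-\top}$, $\Gamma^*=O^{-1}\partial_\tau O$, all as functions of $\tau$. $\Omega=B_1(0)\subset\mathbb R^3$, $w(y)=\frac{\delta(\gamma-1)}{2\gamma}(1-|y|^2)$. $\eta=y+\theta$, $\mathscr A=[D\eta]^{-1}$, $\mathscr J=\det D\eta$; Einstein summation, $F_{,k}=\partial_{y_k}F$. For $\mathbf F:\Omega\to\mathbb R^3$ (or $\mathbb R^3$-valued), $[\mathrm{Curl}_{\Lambda\mathscr A}\mathbf F]^i_j=\Lambda_{jm}\mathscr A^s_m\mathbf F^i_{,s}-\Lambda_{im}\mathscr A^s_m\mathbf F^j_{,s}$, and for time-dependent $\mathbf F$, $[\partial_\tau,\mathrm{Curl}_{\Lambda\mathscr A}]\mathbf F:=\partial_\tau(\mathrm{Curl}_{\Lambda\mathscr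 A}\mathbf F)-\mathrm{Curl}_{\Lambda\mathscr A}(\partial_\tau\mathbf F)$, i.e. $[\partial_\tau,\mathrm{Curl}_{\Lambda\mathscr A}]\mathbf F^k_j=\partial_\tau(\Lambda_{jm}\mathscr A^s_m)\mathbf F^k_{,s}-\partial_\tau(\Lambda_{km}\mathscr A^s_m)\mathbf F^j_{,s}$. $\Gamma^*\mathbf V$ is the matrix–vector product. *)

From Stdlib Require Import Reals Lra.
From Coquelicot Require Import Coquelicot.
Open Scope R_scope.

(** 3x3 matrices and 3-vectors, indexed by naturals 0,1,2
    (entries at indices >= 3 are never used). *)
Definition mat := nat -> nat -> R.
Definition vec := nat -> R.

Definition sum3 (f : nat -> R) : R := f 0%nat + f 1%nat + f 2%nat.
Definition kron (i j : nat) : R := if Nat.eqb i j then 1 else 0.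

Definition det3 (M : mat) : R :=
    M 0%nat 0%nat * (M 1%nat 1%nat * M 2%nat 2%nat - M 1%nat 2%nat * M 2%nat 1%nat)
  - M 0%nat 1%nat * (M 1%nat 0%nat * M 2%nat 2%nat - M 1%nat 2%nat * M 2%nat 0%nat)
  + M 0%nat 2%nat * (M 1%nat 0%nat * M 2%nat 1%nat - M 1%nat 1%nat * M 2%nat 0%nat).

Definition cof3 (M : mat) (i j : nat) : R :=
  let i1 := ((i + 1) mod 3)%nat in let i2 := ((i + 2) mod 3)%nat in
  let j1 := ((j + 1) mod 3)%nat in let j2 := ((j + 2) mod 3)%nat in
  M i1 j1 * M i2 j2 - M i1 j2 * M i2 j1.

Definition inv3 (M : mat) : mat := fun i j => cof3 M j i / det3 M.

Definition pt := (R * R * R)%type.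
Definition coord (y : pt) (k : nat) : R :=
  match k with 0%nat => fst (fst y) | 1%nat => snd (fst y) | _ => snd y end.
Definition shift (y : pt) (k : nat) (h : R) : pt :=
  match k with
  | 0%nat => ((fst (fst y) + h, snd (fst y)), snd y)
  | 1%nat => ((fst (fst y), snd (fst y) + h), snd y)
  | _ => (fst y, snd y + h)
  end.

Definition inOmega (y : pt) : Prop :=
  coord y 0 ^ 2 + coord y 1 ^ 2 + coord y 2 ^ 2 < 1.

Definition wfun (gamma delta : R) (y : pt) : R :=
  delta * (gamma - 1) / (2 * gamma) * (1 - (coord y 0 ^ 2 + coord y 1 ^ 2 + coord y 2 ^ 2)).
Definition alpha (gamma : R) : R := / (gamma - 1).

Definition pdy (k : nat) (f : pt -> R) (y : pt) : R :=
  Derive (fun h => f (shift y k h)) 0.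

(** partial derivatives in (tau, y): direction 0 is tau, direction k+1 is y_k *)
Definition pd (d : nat) (g : R -> pt -> R) : R -> pt -> R :=
  match d with
  | 0%nat => fun s y => Derive (fun r => g r y) s
  | S k => fun s y => pdy k (g s) y
  end.
Definition pds (ds : list nat) (g : R -> pt -> R) : R -> pt -> R :=
  List.fold_right pd g ds.
Definition ex_pd (d : nat) (g : R -> pt -> R) (s : R) (y : pt) : Prop :=
  match d with
  | 0%nat => ex_derive (fun r => g r y) s
  | S k => ex_derive (fun h => g s (shift y k h)) 0
  end.

Definition smooth_on (U : R -> pt -> Prop) (g : R -> pt -> R) : Prop :=
  forall (ds : list nat) (s : R) (y : pt), U s y ->
    continuous (fun p : R * pt => pds ds g (fst p) (snd p)) (s, y) /\
    (forall d : nat, (d <= 3)%nat -> ex_pd d (pds ds g) s y).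

(** Lagrangian quantities: eta = y + theta, D eta, scriptA = [D eta]^{-1}
    (scriptA^k_j = entry (k,j)), scriptJ = det D eta *)
Definition Deta (theta : R -> pt -> vec) (s : R) (y : pt) : mat :=
  fun i j => kron i j + pdy j (fun z => theta s z i) y.
Definition Acal (theta : R -> pt -> vec) (s : R) (y : pt) : mat :=
  inv3 (Deta theta s y).
Definition Jac (theta : R -> pt -> vec) (s : R) (y : pt) : R :=
  det3 (Deta theta s y).

(** quantities of the affine motion, as functions of tau;
    tt is t as a function of tau *)
Definition mu_of (A : R -> mat) (tt : R -> R) (s : R) : R :=
  Rpower (det3 (A (tt s))) (1/3).
Definition O_of (A : R -> mat) (tt : R -> R) (s : R) : mat :=
  fun i j => A (tt s) i j / mu_of A tt s.
Definition Lam_of (A : R -> mat) (tt : R -> R) (s : R) : mat :=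
  fun i j => Rpower (det3 (A (tt s))) (2/3) *
             sum3 (fun k => inv3 (A (tt s)) i k * inv3 (A (tt s)) j k).
Definition Gam_of (A : R -> mat) (tt : R -> R) (s : R) : mat :=
  fun i j => sum3 (fun k => inv3 (O_of A tt s) i k *
                            Derive (fun r => O_of A tt r k j) s).

Definition curlLA (L : mat) (Ac : pt -> mat) (F : pt -> vec) (y : pt) (i j : nat) : R :=
  sum3 (fun m => L j m * sum3 (fun k => Ac y k m * pdy k (fun z => F z i) y))
  - sum3 (fun m => L i m * sum3 (fun k => Ac y k m * pdy k (fun z => F z j) y)).

Definition commLA (L : R -> mat) (Ac : R -> pt -> mat) (F : R -> pt -> vec)
    (s : R) (y : pt) (k j : nat) : R :=
  sum3 (fun m => sum3 (fun q => Derive (fun r => L r j m * Ac r y q m) s *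
                                 pdy q (fun z => F s z k) y))
  - sum3 (fun m => sum3 (fun q => Derive (fun r => L r k m * Ac r y q m) s *
                                   pdy q (fun z => F s z j) y)).

Definition Vel (theta : R -> pt -> vec) (s : R) (y : pt) : vec :=
  fun i => Derive (fun r => theta r y i) s.
Definition GamV (G : R -> mat) (V : R -> pt -> vec) (s : R) (y : pt) : vec :=
  fun i => sum3 (fun j => G s i j * V s y j).

(* The pressure term of the equation is w^α Λ B with
   B = ∇_η (δ |η|² / 2 + (1 + α) w J^(-1/α))   (Piola identity),
   a gradient in Eulerian coordinates.  Its Eulerian Jacobian A^T (DB) is thus a
   symmetric Hessian, and Curl_{ΛA} annihilates every field of the form Λ B with
   such a B.  Hence the curl of the equation is the linear ODE
     ∂τ c + (μ_τ / μ) c = [∂τ, Curl_{ΛA}] V - 2 Curl_{ΛA}(Γ* V),   c = Curl_{ΛA} V,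
   solved with the integrating factor μ; integrating
   ∂τ Curl_{ΛA} θ = [∂τ, Curl_{ΛA}] θ + Curl_{ΛA} V gives the second formula. *)

From Stdlib Require Import Reals Lra Lia Ranalysis5.
From Coquelicot Require Import Coquelicot.
Open Scope R_scope.

Lemma lt3_cases (k : nat) : (k < 3)%nat -> k = 0%nat \/ k = 1%nat \/ k = 2%nat.
Proof. lia. Qed.

Ltac cases3 k Hk := destruct (lt3_cases k Hk) as [ -> | [ -> | -> ] ].

Ltac entries3 H :=
  pose proof (H 0%nat 0%nat ltac:(lia) ltac:(lia)); pose proof (H 0%nat 1%nat ltac:(lia) ltac:(lia));
  pose proof (H 0%nat 2%nat ltac:(lia) ltac:(lia)); pose proof (H 1%nat 0%nat ltac:(lia) ltac:(lia));
  pose proof (H 1%nat 1%nat ltac:(lia) ltac:(lia)); pose proof (H 1%nat 2%nat ltac:(lia) ltac:(lia));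
  pose proof (H 2%nat 0%nat ltac:(lia) ltac:(lia)); pose proof (H 2%nat 1%nat ltac:(lia) ltac:(lia));
  pose proof (H 2%nat 2%nat ltac:(lia) ltac:(lia)).

Lemma sum3_ext f g : (forall k, (k < 3)%nat -> f k = g k) -> sum3 f = sum3 g.
Proof. intros H; unfold sum3; rewrite !H by lia; reflexivity. Qed.

Lemma sum3_minus f g : sum3 (fun k => f k - g k) = sum3 f - sum3 g.
Proof. unfold sum3; ring. Qed.

Lemma sum3_scal c f : sum3 (fun k => c * f k) = c * sum3 f.
Proof. unfold sum3; ring. Qed.

Lemma sum3_swap (f : nat -> nat -> R) :
  sum3 (fun a => sum3 (fun b => f a b)) = sum3 (fun b => sum3 (fun a => f a b)).
Proof. unfold sum3; ring. Qed.

Lemma sum3_swap13 (f : nat -> nat -> nat -> R) :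
  sum3 (fun a => sum3 (fun b => sum3 (fun c => f a b c)))
  = sum3 (fun c => sum3 (fun b => sum3 (fun a => f a b c))).
Proof. unfold sum3; ring. Qed.

Lemma sum3_kron_l l f : (l < 3)%nat -> sum3 (fun k => kron l k * f k) = f l.
Proof. intros Hl; cases3 l Hl; unfold sum3, kron; simpl; ring. Qed.

Lemma sum3_kron_r l f : (l < 3)%nat -> sum3 (fun k => kron k l * f k) = f l.
Proof. intros Hl; cases3 l Hl; unfold sum3, kron; simpl; ring. Qed.

Lemma kron_sym k l : kron k l = kron l k.
Proof. unfold kron; rewrite Nat.eqb_sym; reflexivity. Qed.

Lemma Rabs_kron_le k m h : Rabs (kron k m * h) <= Rabs h.
Proof.
  unfold kron; destruct (Nat.eqb k m); rewrite Rabs_mult;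
    [rewrite Rabs_R1 | rewrite Rabs_R0]; pose proof (Rabs_pos h); lra.
Qed.

Lemma mul_inv3 M l m : det3 M <> 0 -> (l < 3)%nat -> (m < 3)%nat ->
  sum3 (fun q => M l q * inv3 M q m) = kron l m.
Proof.
  intros Hd Hl Hm. unfold inv3, sum3, det3 in *.
  cases3 l Hl; cases3 m Hm; unfold cof3, kron; simpl; field; exact Hd.
Qed.

(* The derivative of [det3] at [M] in the direction [N] (Jacobi's formula). *)
Definition ddet3 (M N : mat) : R :=
  sum3 (fun p => sum3 (fun q => cof3 M p q * N p q)).

Lemma ddet3_inv3 M N : det3 M <> 0 ->
  ddet3 M N = det3 M * sum3 (fun p => sum3 (fun q => inv3 M q p * N p q)).
Proof.
  intros Hd. unfold ddet3, inv3. rewrite <- sum3_scal. apply sum3_ext; intros p _.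
  rewrite <- sum3_scal. apply sum3_ext; intros q _. field; exact Hd.
Qed.

Definition dcof3 (M N : mat) (i j : nat) : R :=
  let i1 := ((i + 1) mod 3)%nat in let i2 := ((i + 2) mod 3)%nat in
  let j1 := ((j + 1) mod 3)%nat in let j2 := ((j + 2) mod 3)%nat in
  N i1 j1 * M i2 j2 + M i1 j1 * N i2 j2 - (N i1 j2 * M i2 j1 + M i1 j2 * N i2 j1).

Lemma dcof3_sym M X Y :
  sum3 (fun p => sum3 (fun r => dcof3 M X p r * Y p r))
  = sum3 (fun p => sum3 (fun r => dcof3 M Y p r * X p r)).
Proof. unfold sum3, dcof3; simpl; ring. Qed.

Lemma is_derive_replace (f : R -> R) (x a b : R) : is_derive f x a -> a = b -> is_derive f x b.
Proof. intros H ->; exact H. Qed.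

Lemma is_derive_ext_R (f g : R -> R) (x l : R) :
  (forall t, f t = g t) -> is_derive f x l -> is_derive g x l.
Proof. exact (is_derive_ext f g x l). Qed.

Lemma is_derive_Rplus (f g : R -> R) (x a b : R) : is_derive f x a -> is_derive g x b ->
  is_derive (fun t => f t + g t) x (a + b).
Proof. exact (is_derive_plus f g x a b). Qed.

Lemma is_derive_Rminus (f g : R -> R) (x a b : R) : is_derive f x a -> is_derive g x b ->
  is_derive (fun t => f t - g t) x (a - b).
Proof. exact (is_derive_minus f g x a b). Qed.

Lemma is_derive_Rmult (f g : R -> R) (x a b : R) : is_derive f x a -> is_derive g x b ->
  is_derive (fun t => f t * g t) x (a * g x + f x * b).
Proof. intros H H0; exact (is_derive_mult f g x a b H H0 Rmult_comm). Qed.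

Lemma is_derive_Rconst (c : R) x : is_derive (fun _ => c) x 0.
Proof. exact (is_derive_const c x). Qed.

Lemma is_derive_Rid x : is_derive (fun t => t) x 1.
Proof. exact (is_derive_id x). Qed.

Lemma is_derive_Ropp (f : R -> R) (x a : R) : is_derive f x a -> is_derive (fun t => - f t) x (- a).
Proof. exact (is_derive_opp f x a). Qed.

Lemma is_derive_Rinv (f : R -> R) (x a : R) : is_derive f x a -> f x <> 0 ->
  is_derive (fun t => / f t) x (- a / (f x * f x)).
Proof.
  intros H H0. eapply is_derive_replace; [exact (is_derive_inv f x a H H0) | change (- a / (f x * (f x * 1)) = - a / (f x * f x)); rewrite Rmult_1_r; reflexivity].
Qed.

Lemma is_derive_Rdiv (f g : R -> R) (x a b : R) : is_derive f x a -> is_derive g x b -> g x <> 0 ->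
  is_derive (fun t => f t / g t) x (a / g x - f x * b / (g x * g x)).
Proof.
  intros H1 H2 H3. eapply is_derive_replace; [exact (is_derive_Rmult _ _ _ _ _ H1 (is_derive_Rinv _ _ _ H2 H3)) | cbv beta; field; exact H3].
Qed.

Lemma is_derive_sum3 (F : R -> nat -> R) (dF : nat -> R) x :
  (forall j, (j < 3)%nat -> is_derive (fun t => F t j) x (dF j)) ->
  is_derive (fun t => sum3 (F t)) x (sum3 dF).
Proof. intros H. unfold sum3. apply is_derive_Rplus; [apply is_derive_Rplus|]; apply H; lia. Qed.

Lemma is_derive_Rpower_id c t : 0 < t -> is_derive (fun u => Rpower u c) t (c * Rpower t (c - 1)).
Proof. intros H. apply is_derive_Reals. apply derivable_pt_lim_power; auto. Qed.

Lemma is_derive_Rpower (f : R -> R) (x l c : R) : is_derive f x l -> 0 < f x ->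
  is_derive (fun t => Rpower (f t) c) x (c * Rpower (f x) c / f x * l).
Proof.
  intros H Hp. eapply is_derive_replace.
  - exact (is_derive_comp (fun u => Rpower u c) f x _ l (is_derive_Rpower_id c (f x) Hp) H).
  - simpl. change (l * (c * Rpower (f x) (c - 1)) = c * Rpower (f x) c / f x * l).
    unfold Rminus. rewrite Rpower_plus, Rpower_Ropp, Rpower_1 by auto. field. lra.
Qed.

Ltac is_derive_poly :=
  repeat first [ eassumption | simple eapply is_derive_Rconst | simple eapply is_derive_Rid
  | simple eapply is_derive_Rplus | simple eapply is_derive_Rminus | simple eapply is_derive_Rmult
  | simple eapply is_derive_Ropp ].

Lemma is_derive_det3 (M : R -> mat) (M' : mat) x :
  (forall p q, (p < 3)%nat -> (q < 3)%nat -> is_derive (fun h => M h p q) x (M' p q)) ->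
  is_derive (fun h => det3 (M h)) x (ddet3 (M x) M').
Proof.
  intros H. entries3 H.
  unfold det3. eapply is_derive_replace; [is_derive_poly | unfold ddet3, sum3, cof3; simpl; ring].
Qed.

Lemma is_derive_inv3 (M : R -> mat) (M' : mat) (x : R) k l :
  (forall p q, (p < 3)%nat -> (q < 3)%nat -> is_derive (fun h => M h p q) x (M' p q)) ->
  det3 (M x) <> 0 -> (k < 3)%nat -> (l < 3)%nat ->
  is_derive (fun h => inv3 (M h) k l) x
    (- sum3 (fun p => sum3 (fun q => inv3 (M x) k p * M' p q * inv3 (M x) q l))).
Proof.
  intros H Hd Hk Hl.
  assert (Hdet := is_derive_det3 M M' x H). entries3 H.
  unfold inv3, ddet3, sum3, det3 in *.
  cases3 k Hk; cases3 l Hl;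
  (eapply is_derive_replace;
    [ eapply is_derive_Rdiv; [ unfold cof3; simpl; is_derive_poly | exact Hdet | exact Hd]
    | unfold cof3; simpl; field; exact Hd ]).
Qed.

Lemma is_derive_cof3 (M : R -> mat) (M' : mat) x i j :
  (forall p q, (p < 3)%nat -> (q < 3)%nat -> is_derive (fun h => M h p q) x (M' p q)) ->
  is_derive (fun h => cof3 (M h) i j) x (dcof3 (M x) M' i j).
Proof.
  intros H. unfold cof3, dcof3.
  assert (L : forall n, (n mod 3 < 3)%nat) by (intros; apply Nat.mod_upper_bound; lia).
  apply is_derive_Rminus; apply is_derive_Rmult; apply H; apply L.
Qed.

Lemma is_derive_translate (F : R -> R) c u l :
  is_derive F (c + u) l <-> is_derive (fun t => F (c + t)) u l.
Proof.
  split; intros H.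
  - assert (Hg : is_derive (fun t => c + t) u 1).
    { eapply is_derive_replace; [apply is_derive_Rplus; [apply is_derive_Rconst | apply is_derive_Rid] | ring]. }
    eapply is_derive_replace; [exact (is_derive_comp F (fun t => c + t) u l 1 H Hg) | change (1 * l = l); ring].
  - assert (Hg : is_derive (fun t => t - c) (c + u) 1).
    { eapply is_derive_replace; [apply is_derive_Rminus; [apply is_derive_Rid | apply is_derive_Rconst] | ring]. }
    assert (H2 := is_derive_comp (fun t => F (c + t)) (fun t => t - c) (c + u) l 1).
    cbv beta in H2. replace (c + u - c) with u in H2 by ring.
    eapply is_derive_ext; [ | eapply is_derive_replace; [exact (H2 H Hg) | change (1 * l = l); ring] ].
    intros t; simpl; f_equal; ring.
Qed.

Lemma ex_derive_translate (F : R -> R) c u :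
  ex_derive F (c + u) <-> ex_derive (fun t => F (c + t)) u.
Proof. split; intros [l H]; exists l; apply (is_derive_translate F c u l); auto. Qed.

Lemma Derive_translate (F : R -> R) c u : Derive (fun t => F (c + t)) u = Derive F (c + u).
Proof. unfold Derive. f_equal. apply Lim_ext. intros h. rewrite !Rplus_assoc. reflexivity. Qed.

Lemma shift_shift y k a b : shift (shift y k a) k b = shift y k (a + b).
Proof. destruct y as [[y0 y1] y2]; destruct k as [|[|k]]; simpl; rewrite Rplus_assoc; reflexivity. Qed.

Lemma shift_comm y k l a b : k <> l -> (k < 3)%nat -> (l < 3)%nat ->
  shift (shift y k a) l b = shift (shift y l b) k a.
Proof. intros Hkl Hk Hl. destruct y as [[y0 y1] y2]. cases3 k Hk; cases3 l Hl; try lia; reflexivity. Qed.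

Lemma shift0 y k : shift y k 0 = y.
Proof. destruct y as [[y0 y1] y2]; destruct k as [|[|k]]; simpl; rewrite Rplus_0_r; reflexivity. Qed.

Lemma coord_shift y k h m : (k < 3)%nat -> (m < 3)%nat ->
  coord (shift y k h) m = coord y m + kron k m * h.
Proof. intros Hk Hm. destruct y as [[y0 y1] y2]. cases3 k Hk; cases3 m Hm; unfold kron; simpl; ring. Qed.

Lemma Derive_shift (F : pt -> R) y k u :
  Derive (fun t => F (shift y k t)) u = pdy k F (shift y k u).
Proof.
  unfold pdy. rewrite <- (Rplus_0_r u) at 1. rewrite <- Derive_translate.
  apply Derive_ext. intros h. rewrite shift_shift. reflexivity.
Qed.

Lemma ex_derive_shift (F : pt -> R) y k u :
  ex_derive (fun t => F (shift y k t)) u <-> ex_derive (fun h => F (shift (shift y k u) k h)) 0.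
Proof.
  rewrite <- (Rplus_0_r u) at 1. rewrite ex_derive_translate.
  split; apply ex_derive_ext; intros h; rewrite shift_shift; reflexivity.
Qed.

Lemma is_derive_pdy (F : pt -> R) y k : ex_derive (fun h => F (shift y k h)) 0 ->
  is_derive (fun h => F (shift y k h)) 0 (pdy k F y).
Proof. intros H. apply Derive_correct. exact H. Qed.

Definition move (d : nat) (p : R * pt) (h : R) : R * pt :=
  match d with
  | 0%nat => (fst p + h, snd p)
  | S k => (fst p, shift (snd p) k h)
  end.

Definition uncurry_pt {X : Type} (g : R -> pt -> X) (p : R * pt) : X := g (fst p) (snd p).

Lemma move0 d p : move d p 0 = p.
Proof. destruct p as [s y]; destruct d; simpl; [rewrite Rplus_0_r | rewrite shift0]; reflexivity. Qed.

Lemma move_comm d e p u v : d <> e -> (d <= 3)%nat -> (e <= 3)%nat ->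
  move d (move e p v) u = move e (move d p u) v.
Proof.
  intros Hde Hd He. destruct p as [s y].
  destruct d as [|k]; destruct e as [|l]; simpl; try lia; try reflexivity.
  rewrite shift_comm by lia. reflexivity.
Qed.

Lemma Derive_move g d p u :
  Derive (fun t => uncurry_pt g (move d p t)) u = uncurry_pt (pd d g) (move d p u).
Proof.
  destruct d as [|k]; unfold uncurry_pt; simpl.
  - apply (Derive_translate (fun r => g r (snd p))).
  - apply (Derive_shift (g (fst p))).
Qed.

Lemma ex_derive_move g d p u :
  ex_derive (fun t => uncurry_pt g (move d p t)) u <-> ex_pd d g (fst (move d p u)) (snd (move d p u)).
Proof.
  destruct d as [|k]; unfold uncurry_pt; simpl.
  - symmetry. apply (ex_derive_translate (fun r => g r (snd p))).
  - apply (ex_derive_shift (g (fst p))).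
Qed.

Definition near_by (r : R) (p q : R * pt) : Prop :=
  Rabs (fst q - fst p) <= r /\
  forall m, (m < 3)%nat -> Rabs (coord (snd q) m - coord (snd p) m) <= r.

Lemma near_by_move d p h : (d <= 3)%nat -> near_by (Rabs h) p (move d p h).
Proof.
  intros Hd. destruct p as [s y]. split.
  - destruct d; simpl; [replace (s + h - s) with h by ring | rewrite Rminus_diag, Rabs_R0; apply Rabs_pos]; lra.
  - intros m Hm. destruct d as [|k]; simpl.
    + rewrite Rminus_diag, Rabs_R0. apply Rabs_pos.
    + rewrite coord_shift by lia. replace (coord y m + kron k m * h - coord y m) with (kron k m * h) by ring.
      apply Rabs_kron_le.
Qed.

Lemma near_by_trans r1 r2 p q w : near_by r1 p q -> near_by r2 q w -> near_by (r1 + r2) p w.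
Proof.
  intros [H1 H2] [H3 H4]. split.
  - replace (fst w - fst p) with ((fst q - fst p) + (fst w - fst q)) by ring.
    eapply Rle_trans; [apply Rabs_triang | lra].
  - intros m Hm. specialize (H2 m Hm). specialize (H4 m Hm).
    replace (coord (snd w) m - coord (snd p) m)
      with ((coord (snd q) m - coord (snd p) m) + (coord (snd w) m - coord (snd q) m)) by ring.
    eapply Rle_trans; [apply Rabs_triang | lra].
Qed.

Lemma near_by_move2 d e p u v : (d <= 3)%nat -> (e <= 3)%nat ->
  near_by (Rabs v + Rabs u) p (move d (move e p v) u).
Proof. intros Hd He. eapply near_by_trans; apply near_by_move; auto. Qed.

Lemma inOmega_open z : inOmega z -> exists d : posreal,
  forall w, (forall m, (m < 3)%nat -> Rabs (coord w m - coord z m) < d) -> inOmega w.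
Proof.
  unfold inOmega. intros Hz.
  set (c := 1 - (coord z 0 ^ 2 + coord z 1 ^ 2 + coord z 2 ^ 2)).
  assert (Hc : 0 < Rmin 1 (c / 9)) by (apply Rmin_pos; unfold c; lra).
  exists (mkposreal _ Hc). simpl. intros w Hw.
  pose proof (Rmin_l 1 (c / 9)); pose proof (Rmin_r 1 (c / 9)).
  set (e := Rmin 1 (c / 9)) in *.
  assert (Hsq : forall a b, a ^ 2 < 1 -> Rabs (b - a) < e -> b ^ 2 < a ^ 2 + 3 * e).
  { intros a b Ha Hb. apply Rabs_def2 in Hb. destruct Hb as [Hb1 Hb2].
    assert (-1 < a < 1) by nra.
    assert (0 < (e - (b - a)) * (1 + a)) by (apply Rmult_lt_0_compat; lra).
    assert (0 < (e + (b - a)) * (1 - a)) by (apply Rmult_lt_0_compat; lra).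
    assert (0 < (e - (b - a)) * (e + (b - a))) by (apply Rmult_lt_0_compat; lra).
    assert (e * e <= e * 1) by (apply Rmult_le_compat_l; lra).
    nra. }
  assert (A0 := Hsq (coord z 0) (coord w 0) ltac:(unfold c in *; nra) (Hw 0%nat ltac:(lia))).
  assert (A1 := Hsq (coord z 1) (coord w 1) ltac:(unfold c in *; nra) (Hw 1%nat ltac:(lia))).
  assert (A2 := Hsq (coord z 2) (coord w 2) ltac:(unfold c in *; nra) (Hw 2%nat ltac:(lia))).
  unfold c in *. change (coord w 0 ^ 2 + coord w 1 ^ 2 + coord w 2 ^ 2 < 1). lra.
Qed.

Lemma locally_inOmega_shift y q : inOmega y -> (q < 3)%nat -> locally 0 (fun h => inOmega (shift y q h)).
Proof.
  intros Hy Hq. destruct (inOmega_open y Hy) as [d Hd]. exists d. intros h Hh. apply Hd.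
  intros l Hl. change (Rabs (h - 0) < d) in Hh. rewrite Rminus_0_r in Hh. rewrite coord_shift by auto.
  replace (coord y l + kron q l * h - coord y l) with (kron q l * h) by ring.
  eapply Rle_lt_trans; [apply Rabs_kron_le | exact Hh].
Qed.

Definition Ub (a b : R) : R -> pt -> Prop := fun s y => a < s < b /\ inOmega y.

Lemma Ub_open a b p : uncurry_pt (Ub a b) p -> exists d : posreal,
  forall r q, r < d -> near_by r p q -> uncurry_pt (Ub a b) q.
Proof.
  unfold uncurry_pt. intros [Hs Hy]. destruct (inOmega_open _ Hy) as [d Hd].
  assert (Hm : 0 < Rmin d (Rmin (fst p - a) (b - fst p))) by (destruct d; simpl; repeat apply Rmin_pos; lra).
  exists (mkposreal _ Hm). simpl. intros r q Hr [Hq1 Hq2].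
  pose proof (Rmin_l d (Rmin (fst p - a) (b - fst p))). pose proof (Rmin_r d (Rmin (fst p - a) (b - fst p))).
  pose proof (Rmin_l (fst p - a) (b - fst p)). pose proof (Rmin_r (fst p - a) (b - fst p)).
  split.
  - apply Rabs_le_between' in Hq1. lra.
  - apply Hd. intros m Hm'. specialize (Hq2 m Hm'). lra.
Qed.

Lemma continuous_near_by (G : R * pt -> R) p : continuous G p ->
  forall eps : posreal, exists d : posreal, forall r q, r < d -> near_by r p q -> Rabs (G q - G p) < eps.
Proof.
  intros H eps. destruct (H (ball (G p) eps) (locally_ball _ _)) as [d Hd].
  exists d. intros r q Hr [Hq1 Hq2]. destruct p as [s [[z0 z1] z2]]; destruct q as [r' [[w0 w1] w2]].
  apply (Hd (r', (w0, w1, w2))). repeat split; simpl in *.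
  - change (Rabs (r' - s) < d). lra.
  - change (Rabs (w0 - z0) < d). specialize (Hq2 0%nat ltac:(lia)). simpl in Hq2. lra.
  - change (Rabs (w1 - z1) < d). specialize (Hq2 1%nat ltac:(lia)). simpl in Hq2. lra.
  - change (Rabs (w2 - z2) < d). specialize (Hq2 2%nat ltac:(lia)). simpl in Hq2. lra.
Qed.

Lemma continuous_time_slice (g : R -> pt -> R) s y :
  continuous (uncurry_pt g) (s, y) -> continuous (fun r => g r y) s.
Proof.
  intros H. apply (continuous_comp (fun r => (r, y)) (uncurry_pt g)); [|exact H].
  intros P [e He]. exists e. intros r Hr. apply He. split; [exact Hr|].
  destruct y as [[z0 z1] z2]; repeat split; simpl; apply ball_center.
Qed.

Section Smooth.

Variable U : R -> pt -> Prop.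

Lemma smooth_pds g ds : smooth_on U g -> smooth_on U (pds ds g).
Proof.
  intros H ds' s y Hsy. specialize (H (ds' ++ ds)%list s y Hsy).
  unfold pds in *. rewrite List.fold_right_app in H. exact H.
Qed.

Lemma smooth_pd g d : smooth_on U g -> smooth_on U (pd d g).
Proof. exact (smooth_pds g (d :: nil)). Qed.

Lemma smooth_continuous g s y : smooth_on U g -> U s y -> continuous (uncurry_pt g) (s, y).
Proof. intros H Hs. exact (proj1 (H nil s y Hs)). Qed.

Lemma smooth_ex_pd g d s y : smooth_on U g -> U s y -> (d <= 3)%nat -> ex_pd d g s y.
Proof. intros H Hs Hd. exact (proj2 (H nil s y Hs) d Hd). Qed.

Lemma smooth_ex_pdy g k s y : smooth_on U g -> U s y -> (k < 3)%nat ->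
  ex_derive (fun h => g s (shift y k h)) 0.
Proof. intros H Hs Hk. exact (smooth_ex_pd g (S k) s y H Hs ltac:(lia)). Qed.

End Smooth.

Section Schwarz.

Variables (a b : R) (g : R -> pt -> R).
Hypothesis g_smooth : smooth_on (Ub a b) g.

Lemma Derive_move2 d e p u v : d <> e -> (d <= 3)%nat -> (e <= 3)%nat ->
  Derive (fun z => Derive (fun t => uncurry_pt g (move e (move d p z) t)) v) u
  = uncurry_pt (pd d (pd e g)) (move d (move e p v) u).
Proof.
  intros Hde Hd He. rewrite <- Derive_move. apply Derive_ext. intros z.
  rewrite Derive_move, move_comm; auto.
Qed.

Lemma continuity_2d_move2 G d e p : (d <= 3)%nat -> (e <= 3)%nat ->
  continuous (uncurry_pt G) p ->
  continuity_2d_pt (fun u v => uncurry_pt G (move d (move e p v) u)) 0 0.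
Proof.
  intros Hd He HG eps. destruct (continuous_near_by _ p HG eps) as [r Hr].
  assert (Hr2 : 0 < r / 2) by (destruct r; simpl; lra).
  exists (mkposreal _ Hr2). simpl. intros u v Hu Hv. rewrite !move0.
  apply (Hr (Rabs v + Rabs u)); [rewrite Rminus_0_r in Hu, Hv; lra | apply near_by_move2; auto].
Qed.

Lemma ex_derive_move2 d e p u v : d <> e -> (d <= 3)%nat -> (e <= 3)%nat ->
  uncurry_pt (Ub a b) (move d (move e p v) u) ->
  ex_derive (fun z => uncurry_pt g (move e (move d p z) v)) u /\
  ex_derive (fun z => uncurry_pt g (move e (move d p u) z)) v /\
  ex_derive (fun z => Derive (fun t => uncurry_pt g (move e (move d p z) t)) v) u /\
  ex_derive (fun z => Derive (fun t => uncurry_pt g (move e (move d p t) z)) u) v.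
Proof.
  intros Hde Hd He HU.
  assert (HU' : uncurry_pt (Ub a b) (move e (move d p u) v)) by (rewrite <- move_comm; auto).
  repeat split.
  - apply (ex_derive_ext (fun z => uncurry_pt g (move d (move e p v) z))).
    { intros z. rewrite move_comm; auto. }
    apply ex_derive_move. exact (smooth_ex_pd _ g d _ _ g_smooth HU Hd).
  - apply ex_derive_move. exact (smooth_ex_pd _ g e _ _ g_smooth HU' He).
  - apply (ex_derive_ext (fun z => uncurry_pt (pd e g) (move d (move e p v) z))).
    { intros z. rewrite Derive_move, move_comm; auto. }
    apply (ex_derive_move (pd e g)). exact (smooth_ex_pd _ _ d _ _ (smooth_pd _ _ e g_smooth) HU Hd).
  - apply (ex_derive_ext (fun z => uncurry_pt (pd d g) (move e (move d p u) z))).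
    { intros z. rewrite <- move_comm, <- Derive_move by auto.
      apply Derive_ext. intros t. rewrite move_comm; auto. }
    apply (ex_derive_move (pd d g)). exact (smooth_ex_pd _ _ e _ _ (smooth_pd _ _ d g_smooth) HU' He).
Qed.

Lemma pd_comm d e s y : Ub a b s y -> (d <= 3)%nat -> (e <= 3)%nat ->
  pd d (pd e g) s y = pd e (pd d g) s y.
Proof.
  intros Hsy Hd He. destruct (Nat.eq_dec d e) as [<-|Hde]; [reflexivity|].
  set (p := (s, y)).
  set (f := fun u v => uncurry_pt g (move e (move d p u) v)).
  assert (Hf : forall u v, f u v = uncurry_pt g (move d (move e p v) u)).
  { intros u v. unfold f. rewrite move_comm; auto. }
  assert (Hloc : locally_2d (fun u v =>
          ex_derive (fun z => f z v) u /\ ex_derive (fun z => f u z) v /\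
          ex_derive (fun z => Derive (fun t => f z t) v) u /\
          ex_derive (fun z => Derive (fun t => f t z) u) v) 0 0).
  { destruct (Ub_open a b p Hsy) as [r Hr].
    assert (Hr2 : 0 < r / 2) by (destruct r; simpl; lra).
    exists (mkposreal _ Hr2). simpl. intros u v Hu Hv. rewrite Rminus_0_r in Hu, Hv.
    apply ex_derive_move2; auto.
    apply (Hr (Rabs v + Rabs u)); [lra | apply near_by_move2; auto]. }
  assert (Hc1 : continuity_2d_pt (fun u v => Derive (fun z => Derive (fun t => f z t) v) u) 0 0).
  { apply continuity_2d_pt_ext with (f := fun u v => uncurry_pt (pd d (pd e g)) (move d (move e p v) u)).
    { intros u v. symmetry. apply Derive_move2; auto. }
    apply continuity_2d_move2; auto. exact (smooth_continuous _ _ s y (smooth_pds _ g (d :: e :: nil) g_smooth) Hsy). }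
  assert (Hc2 : continuity_2d_pt (fun u v => Derive (fun z => Derive (fun t => f t z) u) v) 0 0).
  { apply continuity_2d_pt_ext with (f := fun u v => uncurry_pt (pd e (pd d g)) (move e (move d p u) v)).
    { intros u v. rewrite <- (Derive_move2 e d p v u) by auto. apply Derive_ext. intros z.
      apply Derive_ext. intros t. symmetry. apply Hf. }
    apply (continuity_2d_pt_ext (fun u v => uncurry_pt (pd e (pd d g)) (move d (move e p v) u))).
    { intros u v. rewrite move_comm; auto. }
    apply continuity_2d_move2; auto. exact (smooth_continuous _ _ s y (smooth_pds _ g (e :: d :: nil) g_smooth) Hsy). }
  assert (HS := Schwarz f 0 0 Hloc Hc1 Hc2).
  transitivity (uncurry_pt (pd d (pd e g)) (move d (move e p 0) 0)); [rewrite !move0; reflexivity|].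
  rewrite <- Derive_move2 by auto. change (Derive (fun z => Derive (fun t => f z t) 0) 0 = pd e (pd d g) s y).
  rewrite HS.
  transitivity (uncurry_pt (pd e (pd d g)) (move e (move d p 0) 0)); [|rewrite !move0; reflexivity].
  rewrite <- Derive_move2 by auto. apply Derive_ext. intros z. apply Derive_ext. intros t. apply Hf.
Qed.

End Schwarz.

Lemma continuous_Rplus (f g : R -> R) x :
  continuous f x -> continuous g x -> continuous (fun t => f t + g t) x.
Proof. exact (continuous_plus f g x). Qed.

Lemma continuous_Rminus (f g : R -> R) x :
  continuous f x -> continuous g x -> continuous (fun t => f t - g t) x.
Proof. exact (continuous_minus f g x). Qed.

Lemma continuous_Rmult (f g : R -> R) x :
  continuous f x -> continuous g x -> continuous (fun t => f t * g t) x.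
Proof. exact (continuous_mult f g x). Qed.

Lemma continuous_Rinv (f : R -> R) x : continuous f x -> f x <> 0 -> continuous (fun t => / f t) x.
Proof.
  intros H1 H2. apply (continuous_comp f (fun t => / t)); [exact H1|].
  apply continuity_pt_filterlim, continuity_pt_inv; [apply continuity_pt_id | exact H2].
Qed.

Lemma continuous_Rdiv (f g : R -> R) x :
  continuous f x -> continuous g x -> g x <> 0 -> continuous (fun t => f t / g t) x.
Proof. intros; apply continuous_Rmult; auto; apply continuous_Rinv; auto. Qed.

Lemma continuous_sum3 (F : R -> nat -> R) x :
  (forall k, (k < 3)%nat -> continuous (fun t => F t k) x) -> continuous (fun t => sum3 (F t)) x.
Proof. intros H; unfold sum3; repeat apply continuous_Rplus; apply H; lia. Qed.

Ltac continuous_poly :=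
  repeat first [ assumption | simple apply continuous_const | simple apply continuous_Rplus
  | simple apply continuous_Rminus | simple apply continuous_Rmult ].

Lemma continuous_det3 (M : R -> mat) x :
  (forall p q, (p < 3)%nat -> (q < 3)%nat -> continuous (fun r => M r p q) x) ->
  continuous (fun r => det3 (M r)) x.
Proof. intros H. entries3 H. unfold det3. continuous_poly. Qed.

Lemma continuous_inv3 (M : R -> mat) x k l :
  (forall p q, (p < 3)%nat -> (q < 3)%nat -> continuous (fun r => M r p q) x) ->
  det3 (M x) <> 0 -> (k < 3)%nat -> (l < 3)%nat -> continuous (fun r => inv3 (M r) k l) x.
Proof.
  intros H Hd Hk Hl. assert (HD := continuous_det3 M x H). entries3 H.
  unfold inv3. apply continuous_Rdiv; auto. cases3 k Hk; cases3 l Hl; unfold cof3; simpl; continuous_poly.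
Qed.

Lemma ex_derive_continuous_R (f : R -> R) x : ex_derive f x -> continuous f x.
Proof. exact (ex_derive_continuous f x). Qed.

Lemma locally_pos (f : R -> R) x : continuous f x -> 0 < f x -> locally x (fun t => 0 < f t).
Proof.
  intros H Hp. apply (filter_imp (fun t => Rabs (f t - f x) < f x)).
  - intros t Ht. apply Rabs_def2 in Ht. lra.
  - exact (H _ (locally_ball (f x) (mkposreal _ Hp))).
Qed.

Lemma locally_interval a b s : a < s < b -> locally s (fun r => a < r < b).
Proof.
  intros Hs. assert (Hm : 0 < Rmin (s - a) (b - s)) by (apply Rmin_pos; lra).
  exists (mkposreal _ Hm). intros r Hr. change (Rabs (r - s) < Rmin (s - a) (b - s)) in Hr.
  apply Rabs_def2 in Hr. pose proof (Rmin_l (s - a) (b - s)). pose proof (Rmin_r (s - a) (b - s)). lra.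
Qed.

Definition C1 (f : R -> R) (x : R) : Prop :=
  locally x (fun t => ex_derive f t) /\ continuous (Derive f) x.

Lemma C1_ex_derive f x : C1 f x -> ex_derive f x.
Proof. intros [H _]. exact (locally_singleton _ _ H). Qed.

Lemma C1_continuous f x : C1 f x -> continuous f x.
Proof. intros H. apply ex_derive_continuous_R, C1_ex_derive, H. Qed.

Lemma C1_is_derive f x : C1 f x -> is_derive f x (Derive f x).
Proof. intros H. apply Derive_correct, C1_ex_derive, H. Qed.

Lemma C1_of_is_derive (f f' : R -> R) x :
  locally x (fun t => is_derive f t (f' t)) -> continuous f' x -> C1 f x.
Proof.
  intros H1 H2. split.
  - eapply filter_imp; [|exact H1]. intros t Ht. exists (f' t); exact Ht.
  - apply (continuous_ext_loc _ f'); auto.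
    eapply filter_imp; [|exact H1]. intros t Ht. symmetry. apply is_derive_unique; auto.
Qed.

Lemma C1_const c x : C1 (fun _ => c) x.
Proof.
  apply C1_of_is_derive with (fun _ => 0); [|apply continuous_const].
  apply filter_forall. intros; apply is_derive_Rconst.
Qed.

Lemma C1_plus f g x : C1 f x -> C1 g x -> C1 (fun t => f t + g t) x.
Proof.
  intros [H1 H2] [H3 H4]. apply C1_of_is_derive with (fun t => Derive f t + Derive g t).
  - eapply filter_imp; [|exact (filter_and _ _ H1 H3)]. intros t [Hf Hg].
    apply is_derive_Rplus; apply Derive_correct; auto.
  - apply continuous_Rplus; auto.
Qed.

Lemma C1_minus f g x : C1 f x -> C1 g x -> C1 (fun t => f t - g t) x.
Proof.
  intros [H1 H2] [H3 H4]. apply C1_of_is_derive with (fun t => Derive f t - Derive g t).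
  - eapply filter_imp; [|exact (filter_and _ _ H1 H3)]. intros t [Hf Hg].
    apply is_derive_Rminus; apply Derive_correct; auto.
  - apply continuous_Rminus; auto.
Qed.

Lemma C1_mult f g x : C1 f x -> C1 g x -> C1 (fun t => f t * g t) x.
Proof.
  intros Hf Hg. pose proof (C1_continuous f x Hf). pose proof (C1_continuous g x Hg).
  destruct Hf as [H1 H2], Hg as [H3 H4].
  apply C1_of_is_derive with (fun t => Derive f t * g t + f t * Derive g t).
  - eapply filter_imp; [|exact (filter_and _ _ H1 H3)]. intros t [Hf Hg].
    apply is_derive_Rmult; apply Derive_correct; auto.
  - apply continuous_Rplus; apply continuous_Rmult; auto.
Qed.

Lemma C1_comp f g x : C1 g x -> C1 f (g x) -> C1 (fun t => f (g t)) x.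
Proof.
  intros Hg Hf. pose proof (C1_continuous g x Hg) as Cg.
  destruct Hg as [H1 H2], Hf as [H3 H4].
  assert (L : locally x (fun t => ex_derive f (g t))) by (apply Cg; exact H3).
  apply C1_of_is_derive with (fun t => Derive g t * Derive f (g t)).
  - eapply filter_imp; [|exact (filter_and _ _ H1 L)]. intros t [A B].
    apply Derive_correct in A, B. exact (is_derive_comp f g t _ _ B A).
  - apply continuous_Rmult; auto. apply (continuous_comp g (Derive f)); auto.
Qed.

Lemma C1_inv f x : C1 f x -> f x <> 0 -> C1 (fun t => / f t) x.
Proof.
  intros H1 H2. apply (C1_comp (fun t => / t) f x H1).
  apply C1_of_is_derive with (fun t => - 1 / (t * t)).
  - assert (L : locally (f x) (fun t => 0 < t * t)).
    { apply (locally_pos (fun t => t * t)); [apply continuous_Rmult; apply continuous_id | nra]. }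
    eapply filter_imp; [|exact L]. intros t Ht.
    eapply is_derive_replace; [apply is_derive_Rinv; [apply is_derive_Rid | nra] | cbv beta; field; nra].
  - apply continuous_Rdiv; [apply continuous_const | apply continuous_Rmult; apply continuous_id | nra].
Qed.

Lemma C1_div f g x : C1 f x -> C1 g x -> g x <> 0 -> C1 (fun t => f t / g t) x.
Proof. intros H1 H2 H3. apply C1_mult; auto. apply C1_inv; auto. Qed.

Lemma C1_sum3 (F : R -> nat -> R) x :
  (forall k, (k < 3)%nat -> C1 (fun t => F t k) x) -> C1 (fun t => sum3 (F t)) x.
Proof. intros H; unfold sum3. apply C1_plus; [apply C1_plus|]; apply H; lia. Qed.

Lemma C1_Rpower f c x : C1 f x -> 0 < f x -> C1 (fun t => Rpower (f t) c) x.
Proof.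
  intros H1 H2. apply (C1_comp (fun t => Rpower t c) f x H1).
  apply C1_of_is_derive with (fun t => c * Rpower t (c - 1)).
  - eapply filter_imp; [|exact (locally_pos (fun t => t) (f x) (continuous_id _) H2)].
    intros t Ht. apply is_derive_Rpower_id; auto.
  - apply continuous_Rmult; [apply continuous_const|].
    apply ex_derive_continuous_R. eexists. apply is_derive_Rpower_id; auto.
Qed.

Ltac C1_poly :=
  repeat first [ assumption | simple apply C1_const | simple apply C1_plus
  | simple apply C1_minus | simple apply C1_mult ].

Lemma C1_det3 (M : R -> mat) x :
  (forall p q, (p < 3)%nat -> (q < 3)%nat -> C1 (fun r => M r p q) x) -> C1 (fun r => det3 (M r)) x.
Proof. intros H. entries3 H. unfold det3. C1_poly. Qed.

Lemma C1_inv3 (M : R -> mat) x k l :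
  (forall p q, (p < 3)%nat -> (q < 3)%nat -> C1 (fun r => M r p q) x) ->
  det3 (M x) <> 0 -> (k < 3)%nat -> (l < 3)%nat -> C1 (fun r => inv3 (M r) k l) x.
Proof.
  intros H Hd Hk Hl. assert (HD := C1_det3 M x H). entries3 H.
  unfold inv3. apply C1_div; auto. cases3 k Hk; cases3 l Hl; unfold cof3; simpl; C1_poly.
Qed.

Lemma strict_incr_of_pos_derive (f df : R -> R) c0 :
  (forall t, c0 < t -> is_derive f t (df t)) -> (forall t, c0 < t -> 0 < df t) ->
  forall t1 t2, c0 < t1 -> t1 < t2 -> f t1 < f t2.
Proof.
  intros Hd Hp t1 t2 H1 H2.
  destruct (MVT_cor2 f df t1 t2 H2) as [c [Hc1 Hc2]].
  { intros c Hc. apply is_derive_Reals. apply Hd. lra. }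
  assert (0 < df c) by (apply Hp; lra).
  assert (0 < df c * (t2 - t1)) by (apply Rmult_lt_0_compat; lra). lra.
Qed.

Section RightInverse.

Variables (f df g : R -> R) (c0 a b : R).
Hypothesis f_derive : forall t, c0 < t -> is_derive f t (df t).
Hypothesis df_pos : forall t, c0 < t -> 0 < df t.
Hypothesis g_right_inverse : forall s, a < s < b -> c0 < g s /\ f (g s) = s.

Lemma right_inverse_strict_incr x y : a < x -> x < y -> y < b -> g x < g y.
Proof.
  intros Hx Hxy Hy.
  destruct (g_right_inverse x ltac:(lra)) as [Ax Bx]. destruct (g_right_inverse y ltac:(lra)) as [Ay By].
  destruct (Rlt_or_le (g x) (g y)) as [H|H]; auto.
  destruct (Rle_lt_or_eq_dec _ _ H) as [H'|H'].
  - assert (f (g y) < f (g x)) by (apply (strict_incr_of_pos_derive f df c0); auto). lra.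
  - rewrite H' in By. lra.
Qed.

Lemma right_inverse_incr x y : a < x -> x <= y -> y < b -> g x <= g y.
Proof.
  intros Hx Hxy Hy. destruct (Rle_lt_or_eq_dec _ _ Hxy) as [H|<-]; [|lra].
  left; apply right_inverse_strict_incr; auto.
Qed.

Lemma is_derive_right_inverse s : a < s < b -> continuity_pt g s /\ is_derive g s (/ df (g s)).
Proof.
  intros Hs.
  set (lb := (a + s) / 2). set (ub := (s + b) / 2).
  assert (Hlb : a < lb < s) by (unfold lb; lra). assert (Hub : s < ub < b) by (unfold ub; lra).
  destruct (g_right_inverse lb ltac:(lra)) as [Alb Blb]. destruct (g_right_inverse ub ltac:(lra)) as [Aub Bub].
  assert (Hglu : g lb < g ub) by (apply right_inverse_strict_incr; lra).
  assert (Prf : forall t, g lb <= t <= g ub -> derivable_pt f t).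
  { intros t Ht. exists (df t). apply is_derive_Reals. apply f_derive. lra. }
  assert (Cont : continuity_pt g s).
  { apply (continuity_pt_recip_interv f g (g lb) (g ub) Hglu).
    - intros x y Hx Hxy Hy. apply (strict_incr_of_pos_derive f df c0); auto; lra.
    - intros x Hx1 Hx2. rewrite Blb in Hx1. rewrite Bub in Hx2. unfold comp, id. apply g_right_inverse; lra.
    - intros x Hx1 Hx2. rewrite Blb in Hx1. rewrite Bub in Hx2. split; apply right_inverse_incr; lra.
    - intros t Ht. apply derivable_continuous_pt, Prf. lra.
    - rewrite Blb, Bub. lra. }
  split; [exact Cont|].
  assert (Hgs : g lb <= g s <= g ub) by (split; apply right_inverse_incr; lra).
  assert (HD := derivable_pt_lim_recip_interv f g lb ub s Prf Cont ltac:(lra) ltac:(lra) Hgs).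
  assert (E : derive_pt f (g s) (Prf (g s) Hgs) = df (g s)).
  { apply derive_pt_eq_0. apply is_derive_Reals. apply f_derive. lra. }
  rewrite E in HD. assert (0 < df (g s)) by (apply df_pos; lra).
  apply is_derive_Reals. replace (/ df (g s)) with (1 / df (g s)) by (field; lra).
  apply HD; [intros x Hx; unfold comp, id; apply g_right_inverse; lra | lra].
Qed.

End RightInverse.

Lemma mu_of_pos A tt s : 0 < mu_of A tt s.
Proof. apply exp_pos. Qed.

Section AffineMotion.

Variables (A dA : R -> mat) (eps0 : R) (tau tt : R -> R) (T eps : R).
Hypothesis det_A_pos : forall t, - eps0 < t -> 0 < det3 (A t).
Hypothesis A_derive : forall t i j, - eps0 < t -> (i < 3)%nat -> (j < 3)%nat ->
  is_derive (fun r => A r i j) t (dA t i j).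
Hypothesis dA_ex_derive : forall t i j, - eps0 < t -> (i < 3)%nat -> (j < 3)%nat ->
  ex_derive (fun r => dA r i j) t.
Hypothesis tau_derive : forall t, - eps0 < t -> is_derive tau t (/ Rpower (det3 (A t)) (1/3)).
Hypothesis tt_inverse : forall s, - eps < s < T + eps -> - eps0 < tt s /\ tau (tt s) = s.

Lemma C1_A t i j : - eps0 < t -> (i < 3)%nat -> (j < 3)%nat -> C1 (fun r => A r i j) t.
Proof.
  intros Ht Hi Hj. apply (C1_of_is_derive _ (fun r => dA r i j)).
  - eapply filter_imp; [|exact (locally_interval (- eps0) (t + 1) t ltac:(lra))].
    intros r Hr. apply A_derive; auto; lra.
  - apply ex_derive_continuous_R. apply dA_ex_derive; auto.
Qed.

Lemma C1_Rpower_det_A t c : - eps0 < t -> C1 (fun r => Rpower (det3 (A r)) c) t.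
Proof.
  intros Ht. apply C1_Rpower; [|apply det_A_pos; auto].
  apply C1_det3. intros p q Hp Hq. apply C1_A; auto.
Qed.

Lemma tt_derive s : - eps < s < T + eps ->
  continuous tt s /\ is_derive tt s (Rpower (det3 (A (tt s))) (1/3)).
Proof.
  intros Hs.
  assert (Hpos : forall t, - eps0 < t -> 0 < / Rpower (det3 (A t)) (1/3)).
  { intros t Ht. apply Rinv_0_lt_compat, exp_pos. }
  destruct (is_derive_right_inverse tau _ tt (- eps0) (- eps) (T + eps) tau_derive Hpos tt_inverse s Hs)
    as [C D].
  split; [apply continuity_pt_filterlim; exact C | rewrite Rinv_inv in D; exact D].
Qed.

Lemma C1_comp_tt s (F : R -> R) : - eps < s < T + eps -> C1 F (tt s) -> C1 (fun r => F (tt r)) s.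
Proof.
  intros Hs HF. apply C1_comp; auto.
  apply (C1_of_is_derive _ (fun r => Rpower (det3 (A (tt r))) (1/3))).
  - eapply filter_imp; [|exact (locally_interval _ _ s Hs)]. intros r Hr. exact (proj2 (tt_derive r Hr)).
  - apply (continuous_comp tt (fun t => Rpower (det3 (A t)) (1/3))); [exact (proj1 (tt_derive s Hs))|].
    apply C1_continuous, C1_Rpower_det_A, tt_inverse, Hs.
Qed.

Lemma C1_mu_of s : - eps < s < T + eps -> C1 (mu_of A tt) s.
Proof. intros Hs. apply (C1_comp_tt s (fun t => Rpower (det3 (A t)) (1/3))); auto. apply C1_Rpower_det_A, tt_inverse, Hs. Qed.

Lemma C1_Lam_of s i j : - eps < s < T + eps -> (i < 3)%nat -> (j < 3)%nat ->
  C1 (fun r => Lam_of A tt r i j) s.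
Proof.
  intros Hs Hi Hj. destruct (tt_inverse s Hs) as [Ht _].
  apply (C1_comp_tt s (fun t => Rpower (det3 (A t)) (2/3) * sum3 (fun k => inv3 (A t) i k * inv3 (A t) j k))); auto.
  apply C1_mult; [apply C1_Rpower_det_A; auto|].
  apply C1_sum3. intros k Hk.
  assert (Hd : det3 (A (tt s)) <> 0) by (apply Rgt_not_eq, det_A_pos, Ht).
  apply C1_mult; apply C1_inv3; auto; intros p q Hp Hq; apply C1_A; auto.
Qed.

Lemma C1_O_of s i j : - eps < s < T + eps -> (i < 3)%nat -> (j < 3)%nat -> C1 (fun r => O_of A tt r i j) s.
Proof.
  intros Hs Hi Hj. apply C1_div.
  - apply (C1_comp_tt s (fun t => A t i j)); auto. apply C1_A; auto. apply tt_inverse, Hs.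
  - apply C1_mu_of; auto.
  - apply Rgt_not_eq, mu_of_pos.
Qed.

Lemma det_O_of_pos s : - eps < s < T + eps -> 0 < det3 (O_of A tt s).
Proof.
  intros Hs. pose proof (mu_of_pos A tt s). assert (Hd := det_A_pos (tt s) (proj1 (tt_inverse s Hs))).
  replace (det3 (O_of A tt s)) with (det3 (A (tt s)) / (mu_of A tt s * mu_of A tt s * mu_of A tt s)).
  - apply Rdiv_lt_0_compat; auto. repeat apply Rmult_lt_0_compat; auto.
  - unfold det3, O_of. field. lra.
Qed.

Lemma continuous_Gam_of s i l : - eps < s < T + eps -> (i < 3)%nat -> (l < 3)%nat ->
  continuous (fun r => Gam_of A tt r i l) s.
Proof.
  intros Hs Hi Hl. apply continuous_sum3. intros k Hk. apply continuous_Rmult.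
  - apply (continuous_inv3 (fun r => O_of A tt r)); auto.
    + intros p q Hp Hq. apply C1_continuous, C1_O_of; auto.
    + apply Rgt_not_eq, det_O_of_pos; auto.
  - exact (proj2 (C1_O_of s k l Hs Hk Hl)).
Qed.

End AffineMotion.

Definition smooth_field (a b : R) (F : R -> pt -> vec) : Prop :=
  forall i, (i < 3)%nat -> smooth_on (Ub a b) (fun s y => F s y i).

Lemma smooth_field_Vel a b F : smooth_field a b F -> smooth_field a b (Vel F).
Proof. intros H c Hc. exact (smooth_pd _ _ 0 (H c Hc)). Qed.

Section SmoothField.

Variables (a b : R) (F : R -> pt -> vec).
Hypothesis F_smooth : smooth_field a b F.

Lemma is_derive_field_shift s z k c : a < s < b -> inOmega z -> (k < 3)%nat -> (c < 3)%nat ->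
  is_derive (fun h => F s (shift z k h) c) 0 (pdy k (fun w => F s w c) z).
Proof.
  intros Hs Hz Hk Hc. apply (is_derive_pdy (fun w => F s w c)).
  exact (smooth_ex_pdy _ _ k s z (F_smooth c Hc) (conj Hs Hz) Hk).
Qed.

Lemma pdy_sum3_field (G : mat) s y q c : a < s < b -> inOmega y -> (q < 3)%nat ->
  pdy q (fun z => sum3 (fun l => G c l * F s z l)) y = sum3 (fun l => G c l * pdy q (fun z => F s z l) y).
Proof.
  intros Hs Hy Hq. apply is_derive_unique. apply is_derive_sum3. intros l Hl.
  eapply is_derive_replace;
    [apply is_derive_Rmult; [apply is_derive_Rconst | apply is_derive_field_shift; auto] | cbv beta; ring].
Qed.

Lemma is_derive_pdy_time r y q c : a < r < b -> inOmega y -> (q < 3)%nat -> (c < 3)%nat ->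
  is_derive (fun r' => pdy q (fun z => F r' z c) y) r (pdy q (fun z => Derive (fun r' => F r' z c) r) y).
Proof.
  intros Hr Hy Hq Hc.
  assert (Hcomm := pd_comm a b _ (F_smooth c Hc) 0 (S q) r y (conj Hr Hy) ltac:(lia) ltac:(lia)).
  simpl in Hcomm. rewrite <- Hcomm. apply Derive_correct.
  exact (smooth_ex_pd _ _ 0 r y (smooth_pd _ _ (S q) (F_smooth c Hc)) (conj Hr Hy) ltac:(lia)).
Qed.

Lemma C1_pdy r y q c : a < r < b -> inOmega y -> (q < 3)%nat -> (c < 3)%nat ->
  C1 (fun r' => pdy q (fun z => F r' z c) y) r.
Proof.
  intros Hr Hy Hq Hc.
  apply (C1_of_is_derive _ (fun r' => pdy q (fun z => Derive (fun r'' => F r'' z c) r') y)).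
  - eapply filter_imp; [|exact (locally_interval a b r Hr)]. intros r' Hr'. apply is_derive_pdy_time; auto.
  - apply (continuous_time_slice (pd (S q) (pd 0 (fun s y => F s y c)))).
    apply (smooth_continuous (Ub a b)); [|split; auto].
    apply smooth_pd, smooth_pd, F_smooth; auto.
Qed.

Lemma is_derive_curlLA (L : R -> mat) (Ac : R -> pt -> mat) r y i j :
  a < r < b -> inOmega y -> (i < 3)%nat -> (j < 3)%nat ->
  (forall c m q, (c < 3)%nat -> (m < 3)%nat -> (q < 3)%nat -> ex_derive (fun r' => L r' c m * Ac r' y q m) r) ->
  is_derive (fun r' => curlLA (L r') (Ac r') (F r') y i j) r
    (commLA L Ac F r y i j + curlLA (L r) (Ac r) (fun z k => Derive (fun r' => F r' z k) r) y i j).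
Proof.
  intros Hr Hy Hi Hj HE.
  apply is_derive_ext_R with (fun r' =>
      sum3 (fun m => sum3 (fun q => (L r' j m * Ac r' y q m) * pdy q (fun z => F r' z i) y))
    - sum3 (fun m => sum3 (fun q => (L r' i m * Ac r' y q m) * pdy q (fun z => F r' z j) y))).
  { intros t. unfold curlLA, sum3. ring. }
  assert (HLA : forall c m q, (c < 3)%nat -> (m < 3)%nat -> (q < 3)%nat ->
     is_derive (fun r' => L r' c m * Ac r' y q m) r (Derive (fun r' => L r' c m * Ac r' y q m) r)).
  { intros c m q Hc Hm Hq. apply Derive_correct, HE; auto. }
  eapply is_derive_replace.
  { apply is_derive_Rminus; apply is_derive_sum3; intros m Hm; apply is_derive_sum3; intros q Hq;
      apply is_derive_Rmult; [apply HLA | apply is_derive_pdy_time | apply HLA | apply is_derive_pdy_time];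
      auto. }
  unfold commLA, curlLA, sum3. ring.
Qed.

Lemma continuous_commLA (L : R -> mat) (Ac : R -> pt -> mat) r y i j :
  a < r < b -> inOmega y -> (i < 3)%nat -> (j < 3)%nat ->
  (forall c m q, (c < 3)%nat -> (m < 3)%nat -> (q < 3)%nat -> C1 (fun r' => L r' c m * Ac r' y q m) r) ->
  continuous (fun r' => commLA L Ac F r' y i j) r.
Proof.
  intros Hr Hy Hi Hj HC.
  apply continuous_Rminus; apply continuous_sum3; intros m Hm; apply continuous_sum3; intros q Hq;
    apply continuous_Rmult; [apply HC | apply C1_continuous, C1_pdy | apply HC | apply C1_continuous, C1_pdy];
    auto.
Qed.

End SmoothField.

Lemma alpha_pos gamma : 1 < gamma -> 0 < alpha gamma.
Proof. intros H. unfold alpha. apply Rinv_0_lt_compat. lra. Qed.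

Lemma wfun_pos gamma delta z : 1 < gamma -> 0 < delta -> inOmega z -> 0 < wfun gamma delta z.
Proof.
  intros Hg Hd Hz. unfold wfun, inOmega in *. apply Rmult_lt_0_compat; [|lra].
  unfold Rdiv. apply Rmult_lt_0_compat; [apply Rmult_lt_0_compat; lra | apply Rinv_0_lt_compat; lra].
Qed.

Definition w_coef (gamma delta : R) : R := delta * (gamma - 1) / (2 * gamma).

Definition dw (gamma delta : R) (z : pt) (k : nat) : R := - 2 * w_coef gamma delta * coord z k.

Lemma is_derive_w_shift gamma delta z k : (k < 3)%nat ->
  is_derive (fun h => wfun gamma delta (shift z k h)) 0 (dw gamma delta z k).
Proof.
  intros Hk. unfold wfun.
  apply is_derive_ext_R with (fun h => w_coef gamma delta *
    (1 - ((coord z 0 + kron k 0 * h) * (coord z 0 + kron k 0 * h)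
        + (coord z 1 + kron k 1 * h) * (coord z 1 + kron k 1 * h)
        + (coord z 2 + kron k 2 * h) * (coord z 2 + kron k 2 * h)))).
  { intros h. rewrite !coord_shift by (auto; lia). unfold w_coef. ring. }
  eapply is_derive_replace; [is_derive_poly|].
  unfold dw. cases3 k Hk; unfold kron; simpl; ring.
Qed.

Lemma is_derive_dw_shift gamma delta z q k : (q < 3)%nat -> (k < 3)%nat ->
  is_derive (fun h => dw gamma delta (shift z q h) k) 0 (- 2 * w_coef gamma delta * kron q k).
Proof.
  intros Hq Hk. unfold dw.
  apply is_derive_ext_R with (fun h => - 2 * w_coef gamma delta * (coord z k + kron q k * h)).
  { intros h. rewrite coord_shift by auto. reflexivity. }
  eapply is_derive_replace; [is_derive_poly | ring].
Qed.

Lemma sum3_piola (A : mat) (G : nat -> mat) :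
  (forall k p q, (k < 3)%nat -> (p < 3)%nat -> (q < 3)%nat -> G k p q = G q p k) -> forall j,
  sum3 (fun k => sum3 (fun p => sum3 (fun q => A k p * G k p q * A q j))) =
  sum3 (fun k => A k j * sum3 (fun p => sum3 (fun q => A q p * G k p q))).
Proof.
  intros H j.
  transitivity (sum3 (fun k => sum3 (fun p => sum3 (fun q => A k p * G q p k * A q j)))).
  { apply sum3_ext; intros k Hk; apply sum3_ext; intros p Hp; apply sum3_ext; intros q Hq.
    rewrite H; auto. }
  unfold sum3; ring.
Qed.

Lemma curlLA_Lam_grad (L : mat) (Ac : pt -> mat) (X B : pt -> vec) (DB : nat -> nat -> R) (kap : R) y i j :
  (i < 3)%nat -> (j < 3)%nat ->
  (forall q c, (q < 3)%nat -> (c < 3)%nat ->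
     locally 0 (fun h => X (shift y q h) c = - kap * sum3 (fun l => L c l * B (shift y q h) l))) ->
  (forall q l, (q < 3)%nat -> (l < 3)%nat -> is_derive (fun h => B (shift y q h) l) 0 (DB q l)) ->
  (forall m l, (m < 3)%nat -> (l < 3)%nat ->
     sum3 (fun q => Ac y q m * DB q l) = sum3 (fun q => Ac y q l * DB q m)) ->
  curlLA L Ac X y i j = 0.
Proof.
  intros Hi Hj HX HB HS.
  assert (DX : forall q c, (q < 3)%nat -> (c < 3)%nat ->
            pdy q (fun z => X z c) y = - kap * sum3 (fun l => L c l * DB q l)).
  { intros q c Hq Hc. apply is_derive_unique.
    apply (is_derive_ext_loc (fun h => - kap * sum3 (fun l => L c l * B (shift y q h) l))).
    - eapply filter_imp; [|exact (HX q c Hq Hc)]. intros h Hh. symmetry. exact Hh.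
    - eapply is_derive_replace.
      + apply is_derive_Rmult; [apply is_derive_Rconst|]. apply is_derive_sum3. intros l Hl.
        apply is_derive_Rmult; [apply is_derive_Rconst | apply HB; auto].
      + unfold sum3. ring. }
  transitivity (sum3 (fun m => L j m * sum3 (fun q => Ac y q m * (- kap * sum3 (fun l => L i l * DB q l))))
    - sum3 (fun m => L i m * sum3 (fun q => Ac y q m * (- kap * sum3 (fun l => L j l * DB q l))))).
  { unfold curlLA. f_equal; apply sum3_ext; intros m Hm; f_equal; apply sum3_ext; intros q Hq;
      rewrite DX; auto. }
  set (S := fun m l => sum3 (fun q => Ac y q m * DB q l)).
  transitivity (- kap * sum3 (fun m => sum3 (fun l => (L j m * L i l - L i m * L j l) * S m l)));
    [unfold S, sum3; ring|].
  assert (S10 : S 1%nat 0%nat = S 0%nat 1%nat) by (symmetry; apply HS; lia).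
  assert (S20 : S 2%nat 0%nat = S 0%nat 2%nat) by (symmetry; apply HS; lia).
  assert (S21 : S 2%nat 1%nat = S 1%nat 2%nat) by (symmetry; apply HS; lia).
  unfold sum3. rewrite S10, S20, S21. ring.
Qed.

Lemma curlLA_pdy_linear L Ac (X X1 X2 X3 : pt -> vec) k2 k3 y i j :
  (i < 3)%nat -> (j < 3)%nat ->
  (forall q c, (q < 3)%nat -> (c < 3)%nat ->
     pdy q (fun z => X z c) y = pdy q (fun z => X1 z c) y + k2 * pdy q (fun z => X2 z c) y
                               + k3 * pdy q (fun z => X3 z c) y) ->
  curlLA L Ac X y i j = curlLA L Ac X1 y i j + k2 * curlLA L Ac X2 y i j + k3 * curlLA L Ac X3 y i j.
Proof.
  intros Hi Hj H. unfold curlLA.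
  assert (E : forall c, (c < 3)%nat -> forall m,
     sum3 (fun q => Ac y q m * pdy q (fun z => X z c) y)
     = sum3 (fun q => Ac y q m * pdy q (fun z => X1 z c) y)
       + k2 * sum3 (fun q => Ac y q m * pdy q (fun z => X2 z c) y)
       + k3 * sum3 (fun q => Ac y q m * pdy q (fun z => X3 z c) y)).
  { intros c Hc m. unfold sum3. rewrite !H by lia. ring. }
  transitivity (sum3 (fun m => L j m * (sum3 (fun q => Ac y q m * pdy q (fun z => X1 z i) y)
       + k2 * sum3 (fun q => Ac y q m * pdy q (fun z => X2 z i) y)
       + k3 * sum3 (fun q => Ac y q m * pdy q (fun z => X3 z i) y)))
    - sum3 (fun m => L i m * (sum3 (fun q => Ac y q m * pdy q (fun z => X1 z j) y)
       + k2 * sum3 (fun q => Ac y q m * pdy q (fun z => X2 z j) y)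
       + k3 * sum3 (fun q => Ac y q m * pdy q (fun z => X3 z j) y)))).
  { f_equal; apply sum3_ext; intros m Hm; rewrite E; auto. }
  unfold sum3. ring.
Qed.

Section Lagrangian.

Variables (gamma delta : R) (a b : R) (theta : R -> pt -> vec) (s : R).
Hypothesis gamma_gt_1 : 1 < gamma.
Hypothesis delta_pos : 0 < delta.
Hypothesis theta_smooth : smooth_field a b theta.
Hypothesis s_in : a < s < b.

Definition d2theta (z : pt) (k : nat) : mat :=
  fun p q => pdy k (fun w => pdy q (fun w' => theta s w' p) w) z.

Definition d3theta (z : pt) (q k p r : nat) : R := pdy q (fun w => d2theta w k p r) z.

Definition dJac (z : pt) (k : nat) : R := ddet3 (Deta theta s z) (d2theta z k).

Definition d2Jac (z : pt) (q k : nat) : R :=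
  sum3 (fun p => sum3 (fun r => dcof3 (Deta theta s z) (d2theta z q) p r * d2theta z k p r
                                + cof3 (Deta theta s z) p r * d3theta z q k p r)).

Definition dAcal (z : pt) (k i j : nat) : R :=
  - sum3 (fun p => sum3 (fun q => Acal theta s z i p * d2theta z k p q * Acal theta s z q j)).

Lemma d2theta_sym z k p q : inOmega z -> (k < 3)%nat -> (p < 3)%nat -> (q < 3)%nat ->
  d2theta z k p q = d2theta z q p k.
Proof.
  intros Hz Hk Hp Hq.
  exact (pd_comm a b _ (theta_smooth p Hp) (S k) (S q) s z (conj s_in Hz) ltac:(lia) ltac:(lia)).
Qed.

Lemma d3theta_sym z q k p r : inOmega z ->
  (q < 3)%nat -> (k < 3)%nat -> (p < 3)%nat -> (r < 3)%nat -> d3theta z q k p r = d3theta z k q p r.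
Proof.
  intros Hz Hq Hk Hp Hr.
  exact (pd_comm a b _ (smooth_pd _ _ (S r) (theta_smooth p Hp)) (S q) (S k) s z (conj s_in Hz)
           ltac:(lia) ltac:(lia)).
Qed.

Lemma is_derive_Dtheta_shift z k p q : inOmega z -> (k < 3)%nat -> (p < 3)%nat -> (q < 3)%nat ->
  is_derive (fun h => pdy q (fun w => theta s w p) (shift z k h)) 0 (d2theta z k p q).
Proof.
  intros Hz Hk Hp Hq. apply (is_derive_pdy (fun w => pdy q (fun w' => theta s w' p) w)).
  exact (smooth_ex_pdy _ _ k s z (smooth_pd _ _ (S q) (theta_smooth p Hp)) (conj s_in Hz) Hk).
Qed.

Lemma is_derive_Deta_shift z k p q : inOmega z -> (k < 3)%nat -> (p < 3)%nat -> (q < 3)%nat ->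
  is_derive (fun h => Deta theta s (shift z k h) p q) 0 (d2theta z k p q).
Proof.
  intros. eapply is_derive_replace;
    [apply is_derive_Rplus; [apply is_derive_Rconst | apply is_derive_Dtheta_shift; auto] | ring].
Qed.

Lemma is_derive_d2theta_shift z q k p r : inOmega z ->
  (q < 3)%nat -> (k < 3)%nat -> (p < 3)%nat -> (r < 3)%nat ->
  is_derive (fun h => d2theta (shift z q h) k p r) 0 (d3theta z q k p r).
Proof.
  intros Hz Hq Hk Hp Hr. apply (is_derive_pdy (fun w => d2theta w k p r)).
  exact (smooth_ex_pdy _ _ q s z (smooth_pd _ _ (S k) (smooth_pd _ _ (S r) (theta_smooth p Hp)))
           (conj s_in Hz) Hq).
Qed.

Lemma is_derive_Jac_shift z k : inOmega z -> (k < 3)%nat ->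
  is_derive (fun h => Jac theta s (shift z k h)) 0 (dJac z k).
Proof.
  intros Hz Hk. assert (H := is_derive_det3 (fun h => Deta theta s (shift z k h)) (d2theta z k) 0).
  cbv beta in H. rewrite shift0 in H. apply H. intros p q Hp Hq. apply is_derive_Deta_shift; auto.
Qed.

Lemma is_derive_dJac_shift z q k : inOmega z -> (q < 3)%nat -> (k < 3)%nat ->
  is_derive (fun h => dJac (shift z q h) k) 0 (d2Jac z q k).
Proof.
  intros Hz Hq Hk. apply is_derive_sum3; intros p Hp. apply is_derive_sum3; intros r Hr.
  assert (HC := is_derive_cof3 (fun h => Deta theta s (shift z q h)) (d2theta z q) 0 p r).
  cbv beta in HC. rewrite shift0 in HC.
  eapply is_derive_replace.
  - apply is_derive_Rmult; [apply HC; intros; apply is_derive_Deta_shift; auto|].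
    apply is_derive_d2theta_shift; auto.
  - cbv beta. rewrite shift0. reflexivity.
Qed.

Lemma d2Jac_sym z q k : inOmega z -> (q < 3)%nat -> (k < 3)%nat -> d2Jac z q k = d2Jac z k q.
Proof.
  intros Hz Hq Hk. unfold d2Jac. set (M := Deta theta s z).
  transitivity (sum3 (fun p => sum3 (fun r => dcof3 M (d2theta z q) p r * d2theta z k p r))
     + sum3 (fun p => sum3 (fun r => cof3 M p r * d3theta z q k p r))); [unfold sum3; ring|].
  rewrite dcof3_sym.
  transitivity (sum3 (fun p => sum3 (fun r => dcof3 M (d2theta z k) p r * d2theta z q p r))
     + sum3 (fun p => sum3 (fun r => cof3 M p r * d3theta z k q p r))); [|unfold sum3; ring].
  f_equal. apply sum3_ext; intros p Hp; apply sum3_ext; intros r Hr. rewrite d3theta_sym; auto.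
Qed.

Lemma is_derive_Acal_shift z k i j : inOmega z -> (k < 3)%nat -> Jac theta s z <> 0 ->
  (i < 3)%nat -> (j < 3)%nat ->
  is_derive (fun h => Acal theta s (shift z k h) i j) 0 (dAcal z k i j).
Proof.
  intros Hz Hk HJ Hi Hj.
  assert (H := is_derive_inv3 (fun h => Deta theta s (shift z k h)) (d2theta z k) 0 i j).
  cbv beta in H. rewrite shift0 in H. apply H; auto. intros p q Hp Hq. apply is_derive_Deta_shift; auto.
Qed.

Lemma piola_identity z j : inOmega z -> Jac theta s z <> 0 -> (j < 3)%nat ->
  sum3 (fun k => dAcal z k k j) = - sum3 (fun k => Acal theta s z k j * dJac z k) / Jac theta s z.
Proof.
  intros Hz HJ Hj. unfold dAcal.
  transitivity (- sum3 (fun k => sum3 (fun p => sum3 (fun q =>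
                   Acal theta s z k p * d2theta z k p q * Acal theta s z q j)))); [unfold sum3; ring|].
  rewrite (sum3_piola (Acal theta s z) (d2theta z)) by (intros; apply d2theta_sym; auto).
  unfold dJac. field_simplify; [|exact HJ].
  transitivity (- sum3 (fun k => Acal theta s z k j * (ddet3 (Deta theta s z) (d2theta z k) / Jac theta s z))).
  { f_equal. apply sum3_ext; intros k Hk. f_equal. rewrite ddet3_inv3 by exact HJ.
    unfold Jac, Acal. field. exact HJ. }
  unfold sum3. field. exact HJ.
Qed.

Definition Jexp : R := - / alpha gamma.

Definition pressure_flux (L : mat) (i k : nat) (z : pt) : R :=
  Rpower (wfun gamma delta z) (1 + alpha gamma) *
    sum3 (fun j => L i j * (Acal theta s z k j * Rpower (Jac theta s z) Jexp - kron k j)).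

(* [dwJ z k] is the y_k-derivative of w J^(-1/α). *)
Definition dwJ (z : pt) (k : nat) : R :=
  dw gamma delta z k * Rpower (Jac theta s z) Jexp
  + Jexp * wfun gamma delta z * Rpower (Jac theta s z) Jexp * dJac z k / Jac theta s z.

Definition d2wJ (z : pt) (q k : nat) : R :=
  let J := Jac theta s z in let P := Rpower J Jexp in let W := wfun gamma delta z in
  let DP := Jexp * P / J * dJac z q in
  (- 2 * w_coef gamma delta * kron q k) * P + dw gamma delta z k * DP
  + Jexp * (dw gamma delta z q * P * dJac z k / J + W * DP * dJac z k / J
            + W * P * d2Jac z q k / J - W * P * dJac z k * dJac z q / (J * J)).

(* The Eulerian gradient of δ |η|² / 2 + (1 + α) w J^(-1/α); the term [- dw] is [δ y]
   because (1 + α) 2 w_coef = δ. *)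
Definition grad_potential (z : pt) (l : nat) : R :=
  delta * theta s z l
  + (1 + alpha gamma) * (sum3 (fun k => Acal theta s z k l * dwJ z k) - dw gamma delta z l).

Definition d_grad_potential (z : pt) (q l : nat) : R :=
  delta * pdy q (fun w => theta s w l) z + (1 + alpha gamma) *
   (sum3 (fun k => dAcal z q k l * dwJ z k + Acal theta s z k l * d2wJ z q k)
    - (- 2 * w_coef gamma delta * kron q l)).

Lemma pdy_pressure_flux L i z k : inOmega z -> 0 < Jac theta s z -> 0 < wfun gamma delta z -> (k < 3)%nat ->
  pdy k (pressure_flux L i k) z =
    (1 + alpha gamma) * Rpower (wfun gamma delta z) (1 + alpha gamma) / wfun gamma delta z
      * dw gamma delta z k * sum3 (fun j => L i j * (Acal theta s z k j * Rpower (Jac theta s z) Jexp - kron k j))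
    + Rpower (wfun gamma delta z) (1 + alpha gamma) *
      sum3 (fun j => L i j * (dAcal z k k j * Rpower (Jac theta s z) Jexp
        + Acal theta s z k j * (Jexp * Rpower (Jac theta s z) Jexp / Jac theta s z * dJac z k))).
Proof.
  intros Hz HJ HW Hk. apply is_derive_unique. unfold pressure_flux. pose proof (alpha_pos gamma gamma_gt_1).
  eapply is_derive_replace.
  { apply is_derive_Rmult.
    - apply is_derive_Rpower; [apply is_derive_w_shift; auto | rewrite shift0; auto].
    - apply is_derive_sum3. intros j Hj. apply is_derive_Rmult; [apply is_derive_Rconst|].
      apply is_derive_Rminus; [|apply is_derive_Rconst]. apply is_derive_Rmult.
      + apply is_derive_Acal_shift; auto. lra.
      + apply is_derive_Rpower; [apply is_derive_Jac_shift; auto | rewrite shift0; auto]. }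
  cbv beta. rewrite !shift0. unfold Jexp, sum3, dJac. field. repeat split; lra.
Qed.

Lemma pressure_term L i z : inOmega z -> 0 < Jac theta s z -> 0 < wfun gamma delta z ->
  sum3 (fun k => pdy k (pressure_flux L i k) z) =
  Rpower (wfun gamma delta z) (alpha gamma) * ((1 + alpha gamma) *
    sum3 (fun l => L i l * (sum3 (fun k => Acal theta s z k l * dwJ z k) - dw gamma delta z l))).
Proof.
  intros Hz HJ HW. pose proof (alpha_pos gamma gamma_gt_1) as Hal.
  rewrite (sum3_ext _ _ (fun k Hk => pdy_pressure_flux L i z k Hz HJ HW Hk)).
  assert (E : forall j, (j < 3)%nat -> dAcal z 0%nat 0%nat j
     = - sum3 (fun k => Acal theta s z k j * dJac z k) / Jac theta s z
       - dAcal z 1%nat 1%nat j - dAcal z 2%nat 2%nat j).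
  { intros j Hj. rewrite <- piola_identity by (auto; lra). unfold sum3. ring. }
  assert (EW : Rpower (wfun gamma delta z) (1 + alpha gamma)
               = wfun gamma delta z * Rpower (wfun gamma delta z) (alpha gamma)).
  { rewrite Rpower_plus, Rpower_1 by auto. ring. }
  rewrite EW. unfold sum3, dwJ, kron. simpl. rewrite !E by lia.
  unfold sum3, Jexp. field. repeat split; lra.
Qed.

Lemma is_derive_dwJ_shift z q k : inOmega z -> 0 < Jac theta s z -> (q < 3)%nat -> (k < 3)%nat ->
  is_derive (fun h => dwJ (shift z q h) k) 0 (d2wJ z q k).
Proof.
  intros Hz HJ Hq Hk. unfold dwJ.
  assert (DJ := is_derive_Jac_shift z q Hz Hq).
  eapply is_derive_replace.
  { apply is_derive_Rplus.
    - apply is_derive_Rmult; [apply is_derive_dw_shift; auto|].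
      apply is_derive_Rpower; [exact DJ | rewrite shift0; auto].
    - apply is_derive_Rdiv; [| exact DJ | rewrite shift0; lra].
      apply is_derive_Rmult; [apply is_derive_Rmult; [apply is_derive_Rmult|]|].
      + apply is_derive_Rconst.
      + apply is_derive_w_shift; auto.
      + apply is_derive_Rpower; [exact DJ | rewrite shift0; auto].
      + apply is_derive_dJac_shift; auto. }
  cbv beta. rewrite !shift0. unfold d2wJ, dJac. field. lra.
Qed.

Lemma d2wJ_sym z q k : inOmega z -> (q < 3)%nat -> (k < 3)%nat -> d2wJ z q k = d2wJ z k q.
Proof.
  intros Hz Hq Hk. unfold d2wJ. cbv zeta. rewrite (d2Jac_sym z q k), (kron_sym q k) by auto.
  unfold Rdiv. ring.
Qed.

Lemma is_derive_grad_potential_shift z q l : inOmega z -> 0 < Jac theta s z -> (q < 3)%nat -> (l < 3)%nat ->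
  is_derive (fun h => grad_potential (shift z q h) l) 0 (d_grad_potential z q l).
Proof.
  intros Hz HJ Hq Hl. unfold grad_potential, d_grad_potential.
  eapply is_derive_replace.
  { apply is_derive_Rplus.
    - apply is_derive_Rmult; [apply is_derive_Rconst | apply (is_derive_field_shift a b); auto].
    - apply is_derive_Rmult; [apply is_derive_Rconst|]. apply is_derive_Rminus.
      + apply is_derive_sum3. intros k Hk. apply is_derive_Rmult.
        * apply is_derive_Acal_shift; auto. lra.
        * apply is_derive_dwJ_shift; auto.
      + apply is_derive_dw_shift; auto. }
  cbv beta. rewrite !shift0. unfold sum3. ring.
Qed.

Definition eulerian_jacobian (z : pt) (m l : nat) : R :=
  sum3 (fun q => Acal theta s z q m * d_grad_potential z q l).

Lemma eulerian_jacobian_expand z m l : 0 < Jac theta s z -> (m < 3)%nat -> (l < 3)%nat ->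
  eulerian_jacobian z m l =
    delta * kron l m + (1 + alpha gamma) *
      (sum3 (fun k => dwJ z k * sum3 (fun q => Acal theta s z q m * dAcal z q k l))
       + sum3 (fun q => sum3 (fun k => Acal theta s z q m * Acal theta s z k l * d2wJ z q k))).
Proof.
  intros HJ Hm Hl. set (A := Acal theta s z).
  assert (HA : sum3 (fun q => A q m * pdy q (fun w => theta s w l) z) = kron l m - A l m).
  { rewrite <- (mul_inv3 (Deta theta s z) l m) by (auto; unfold Jac in HJ; lra).
    rewrite <- (sum3_kron_l l (fun q => A q m)) by auto.
    rewrite <- sum3_minus. apply sum3_ext. intros q Hq. unfold A, Acal, Deta. ring. }
  assert (HK : sum3 (fun q => A q m * kron q l) = A l m).
  { rewrite <- (sum3_kron_r l (fun q => A q m)) by auto. apply sum3_ext; intros; ring. }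
  assert (Hc : (1 + alpha gamma) * (2 * w_coef gamma delta) = delta).
  { unfold alpha, w_coef. field. lra. }
  transitivity (delta * sum3 (fun q => A q m * pdy q (fun w => theta s w l) z)
     + (1 + alpha gamma) * (sum3 (fun k => dwJ z k * sum3 (fun q => A q m * dAcal z q k l))
          + sum3 (fun q => sum3 (fun k => A q m * A k l * d2wJ z q k)))
     + (1 + alpha gamma) * (2 * w_coef gamma delta) * sum3 (fun q => A q m * kron q l)).
  { unfold eulerian_jacobian, d_grad_potential. fold A. unfold sum3. ring. }
  rewrite HA, HK, Hc. ring.
Qed.

Lemma Acal_dAcal_sym z k m l : inOmega z -> (m < 3)%nat -> (l < 3)%nat ->
  sum3 (fun q => Acal theta s z q m * dAcal z q k l) = sum3 (fun q => Acal theta s z q l * dAcal z q k m).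
Proof.
  intros Hz Hm Hl. unfold dAcal. set (A := Acal theta s z).
  transitivity (- sum3 (fun q => sum3 (fun p => sum3 (fun r => A q m * A k p * d2theta z q p r * A r l))));
    [unfold sum3; ring|].
  transitivity (- sum3 (fun q => sum3 (fun p => sum3 (fun r => A q m * A k p * d2theta z r p q * A r l)))).
  { f_equal. apply sum3_ext; intros q Hq; apply sum3_ext; intros p Hp; apply sum3_ext; intros r Hr.
    rewrite (d2theta_sym z q p r); auto. }
  rewrite sum3_swap13. unfold sum3; ring.
Qed.

Lemma eulerian_jacobian_sym z m l : inOmega z -> 0 < Jac theta s z -> (m < 3)%nat -> (l < 3)%nat ->
  eulerian_jacobian z m l = eulerian_jacobian z l m.
Proof.
  intros Hz HJ Hm Hl. rewrite !eulerian_jacobian_expand by auto. rewrite (kron_sym l m).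
  do 3 f_equal.
  - apply sum3_ext. intros k Hk. rewrite Acal_dAcal_sym; auto.
  - rewrite sum3_swap. apply sum3_ext; intros q Hq; apply sum3_ext; intros k Hk.
    rewrite d2wJ_sym; auto. ring.
Qed.


Definition euler_equation (L G : mat) (m k : R) (z : pt) (c : nat) : Prop :=
  Rpower (wfun gamma delta z) (alpha gamma) * Rpower m (3 * gamma - 3) *
    (Derive (fun r => Vel theta r z c) s + k * Vel theta s z c + 2 * sum3 (fun l => G c l * Vel theta s z l))
  + delta * Rpower (wfun gamma delta z) (alpha gamma) * sum3 (fun l => L c l * theta s z l)
  + sum3 (fun q => pdy q (pressure_flux L c q) z) = 0.

Definition inertia (G : mat) (k : R) (z : pt) : vec :=
  fun c => Derive (fun r => Vel theta r z c) s + k * Vel theta s z c + 2 * sum3 (fun l => G c l * Vel theta s z l).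

Lemma inertia_of_euler_equation L G m k z c : inOmega z -> 0 < Jac theta s z ->
  euler_equation L G m k z c ->
  inertia G k z c = - / Rpower m (3 * gamma - 3) * sum3 (fun l => L c l * grad_potential z l).
Proof.
  intros Hz HJ Heq. unfold euler_equation in Heq.
  rewrite pressure_term in Heq by (auto; apply wfun_pos; auto).
  assert (Hm : 0 < Rpower m (3 * gamma - 3)) by apply exp_pos.
  assert (HWa : 0 < Rpower (wfun gamma delta z) (alpha gamma)) by apply exp_pos.
  apply (Rmult_eq_reg_l (Rpower (wfun gamma delta z) (alpha gamma) * Rpower m (3 * gamma - 3)));
    [|apply Rgt_not_eq, Rmult_lt_0_compat; auto].
  unfold inertia, grad_potential. rewrite <- (sum3_scal (- / Rpower m (3 * gamma - 3))).
  unfold sum3 in *. field_simplify; [|lra]. lra.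
Qed.

Lemma curlLA_inertia L G m k y i j : inOmega y -> (i < 3)%nat -> (j < 3)%nat ->
  (forall z, inOmega z -> 0 < Jac theta s z) ->
  (forall z c, inOmega z -> (c < 3)%nat -> euler_equation L G m k z c) ->
  curlLA L (Acal theta s) (inertia G k) y i j = 0.
Proof.
  intros Hy Hi Hj HJ Heq.
  apply (curlLA_Lam_grad L (Acal theta s) (inertia G k) grad_potential (d_grad_potential y)
           (/ Rpower m (3 * gamma - 3))); auto.
  - intros q c Hq Hc. eapply filter_imp; [|exact (locally_inOmega_shift y q Hy Hq)]. intros h Hz.
    apply (inertia_of_euler_equation L G m k); auto.
  - intros q l Hq Hl. apply is_derive_grad_potential_shift; auto.
  - intros m' l Hm Hl. apply eulerian_jacobian_sym; auto.
Qed.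

Lemma curlLA_inertia_expand L G k y i j : inOmega y -> (i < 3)%nat -> (j < 3)%nat ->
  curlLA L (Acal theta s) (inertia G k) y i j
  = curlLA L (Acal theta s) (fun z c => Derive (fun r => Vel theta r z c) s) y i j
    + k * curlLA L (Acal theta s) (Vel theta s) y i j
    + 2 * curlLA L (Acal theta s) (fun z c => sum3 (fun l => G c l * Vel theta s z l)) y i j.
Proof.
  intros Hy Hi Hj. apply curlLA_pdy_linear; auto. intros q c Hq Hc.
  assert (HVel := smooth_field_Vel _ _ _ theta_smooth).
  assert (DV : forall l, (l < 3)%nat ->
     is_derive (fun h => Vel theta s (shift y q h) l) 0 (pdy q (fun z => Vel theta s z l) y)).
  { intros l Hl. apply (is_derive_field_shift a b); auto. }
  assert (DG : is_derive (fun h => sum3 (fun l => G c l * Vel theta s (shift y q h) l)) 0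
                 (sum3 (fun l => G c l * pdy q (fun z => Vel theta s z l) y))).
  { apply is_derive_sum3. intros l Hl.
    eapply is_derive_replace; [apply is_derive_Rmult; [apply is_derive_Rconst | apply DV; auto] | cbv beta; ring]. }
  assert (EG : pdy q (fun z => sum3 (fun l => G c l * Vel theta s z l)) y
               = sum3 (fun l => G c l * pdy q (fun z => Vel theta s z l) y))
    by (apply is_derive_unique; exact DG).
  rewrite EG. apply is_derive_unique. unfold inertia.
  eapply is_derive_replace.
  - apply is_derive_Rplus; [apply is_derive_Rplus|].
    + apply (is_derive_pdy (fun z => Derive (fun r => Vel theta r z c) s)).
      exact (smooth_ex_pdy _ _ q s y (smooth_pd _ _ 0 (HVel c Hc)) (conj s_in Hy) Hq).
    + apply is_derive_Rmult; [apply is_derive_Rconst | apply DV; auto].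
    + apply is_derive_Rmult; [apply is_derive_Rconst | exact DG].
  - cbv beta. ring.
Qed.

End Lagrangian.

Lemma is_RInt_Rplus (f g : R -> R) a b If Ig : is_RInt f a b If -> is_RInt g a b Ig ->
  is_RInt (fun x => f x + g x) a b (If + Ig).
Proof. exact (is_RInt_plus f g a b If Ig). Qed.

Lemma is_RInt_Rminus (f g : R -> R) a b If Ig : is_RInt f a b If -> is_RInt g a b Ig ->
  is_RInt (fun x => f x - g x) a b (If - Ig).
Proof. exact (is_RInt_minus f g a b If Ig). Qed.

Lemma is_RInt_Rscal (f : R -> R) a b k If : is_RInt f a b If -> is_RInt (fun x => k * f x) a b (k * If).
Proof. exact (is_RInt_scal f a b k If). Qed.

Lemma is_RInt_ext_open (f g : R -> R) a b l : a <= b -> (forall x, a < x < b -> f x = g x) ->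
  is_RInt f a b l -> is_RInt g a b l.
Proof.
  intros Hab H. apply is_RInt_ext. intros x Hx. rewrite Rmin_left, Rmax_right in Hx by auto. auto.
Qed.

Lemma is_RInt_continuous (f : R -> R) a b : a <= b -> (forall x, a <= x <= b -> continuous f x) ->
  is_RInt f a b (RInt f a b).
Proof.
  intros Hab H. apply (RInt_correct (V := R_CompleteNormedModule)).
  apply (ex_RInt_continuous (V := R_CompleteNormedModule)). intros z Hz. rewrite Rmin_left, Rmax_right in Hz by auto. auto.
Qed.

Lemma is_RInt_derive_R (F f : R -> R) a b : a <= b ->
  (forall x, a <= x <= b -> is_derive F x (f x)) -> (forall x, a <= x <= b -> continuous f x) ->
  is_RInt f a b (F b - F a).
Proof.
  intros Hab H1 H2. apply (is_RInt_derive F f a b);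
    intros x Hx; rewrite Rmin_left, Rmax_right in Hx by auto; auto.
Qed.

Definition clamp (s r : R) : R := Rmax 0 (Rmin s r).

Lemma clamp_lipschitz s u v : Rabs (clamp s u - clamp s v) <= Rabs (u - v).
Proof.
  unfold clamp, Rmax, Rmin. destruct (Rle_dec s u); destruct (Rle_dec s v);
  repeat match goal with |- context [Rle_dec ?a ?b] => destruct (Rle_dec a b) end;
  unfold Rabs; repeat match goal with |- context [Rcase_abs ?a] => destruct (Rcase_abs a) end; lra.
Qed.

Lemma clamp_continuous s x : continuous (clamp s) x.
Proof.
  intros P [e He]. exists e. intros u Hu. apply He.
  change (Rabs (clamp s u - clamp s x) < e). change (Rabs (u - x) < e) in Hu.
  eapply Rle_lt_trans; [apply clamp_lipschitz | exact Hu].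
Qed.

Lemma clamp_id s r : 0 <= r <= s -> clamp s r = r.
Proof. intros H. unfold clamp, Rmax, Rmin. repeat destruct Rle_dec; lra. Qed.

Lemma clamp_in s r : 0 <= s -> 0 <= clamp s r <= s.
Proof. intros H. unfold clamp, Rmax, Rmin. repeat destruct Rle_dec; lra. Qed.

(* [f ∘ clamp s] is a continuous extension of [f] from [[0, s]] to ℝ, so its primitive is continuous. *)
Lemma ex_RInt_mult_primitive (g f : R -> R) s : 0 <= s ->
  (forall x, 0 <= x <= s -> continuous f x) -> (forall x, 0 <= x <= s -> continuous g x) ->
  ex_RInt (fun r => g r * RInt f 0 r) 0 s.
Proof.
  intros Hs Hf Hg. set (f' := fun r => f (clamp s r)).
  assert (Cf' : forall x, continuous f' x).
  { intros x. apply (continuous_comp (clamp s) f); [apply clamp_continuous | apply Hf, clamp_in; auto]. }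
  assert (CF : forall x, continuous (fun r => RInt f' 0 r) x).
  { intros x. apply (continuous_RInt_1 f' 0 x). apply filter_forall. intros z.
    apply (RInt_correct (V := R_CompleteNormedModule)), (ex_RInt_continuous (V := R_CompleteNormedModule)). intros; apply Cf'. }
  apply (ex_RInt_ext (fun r => g r * RInt f' 0 r)).
  - intros x Hx. rewrite Rmin_left, Rmax_right in Hx by auto. f_equal.
    apply RInt_ext. intros t Ht. rewrite Rmin_left, Rmax_right in Ht by lra.
    unfold f'. rewrite clamp_id; auto. lra.
  - apply (ex_RInt_continuous (V := R_CompleteNormedModule)). intros z Hz. rewrite Rmin_left, Rmax_right in Hz by auto.
    apply continuous_Rmult; auto.
Qed.

(* From [(m c)' = m f]. *)
Lemma integrating_factor (m dm c f : R -> R) s : 0 <= s ->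
  (forall r, 0 <= r <= s -> 0 < m r /\ is_derive m r (dm r)) ->
  (forall r, 0 <= r <= s -> is_derive c r (f r - dm r / m r * c r)) ->
  (forall r, 0 <= r <= s -> continuous (fun q => m q * f q) r) ->
  c s = m 0 * c 0 / m s + / m s * RInt (fun q => m q * f q) 0 s.
Proof.
  intros Hs Hm Hc Hf.
  assert (I : is_RInt (fun q => m q * f q) 0 s (m s * c s - m 0 * c 0)).
  { apply (is_RInt_derive_R (fun q => m q * c q)); auto. intros x Hx.
    destruct (Hm x Hx) as [Hpos Hdm].
    eapply is_derive_replace; [apply is_derive_Rmult; [exact Hdm | apply Hc; auto] | field; lra]. }
  rewrite (is_RInt_unique _ _ _ _ I). destruct (Hm s ltac:(lra)). field. lra.
Qed.

Section CurlFormulas.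

Variables (gamma delta : R) (A dA : R -> mat) (eps0 : R) (tau tt : R -> R) (T eps : R)
  (theta : R -> pt -> vec).
Hypothesis gamma_gt_1 : 1 < gamma.
Hypothesis delta_pos : 0 < delta.
Hypothesis eps_pos : 0 < eps.
Hypothesis det_A_pos : forall t, - eps0 < t -> 0 < det3 (A t).
Hypothesis A_derive : forall t i j, - eps0 < t -> (i < 3)%nat -> (j < 3)%nat ->
  is_derive (fun r => A r i j) t (dA t i j).
Hypothesis dA_ex_derive : forall t i j, - eps0 < t -> (i < 3)%nat -> (j < 3)%nat ->
  ex_derive (fun r => dA r i j) t.
Hypothesis tau_derive : forall t, - eps0 < t -> is_derive tau t (/ Rpower (det3 (A t)) (1/3)).
Hypothesis tt_inverse : forall s, - eps < s < T + eps -> - eps0 < tt s /\ tau (tt s) = s.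
Hypothesis theta_smooth : smooth_field (- eps) (T + eps) theta.
Hypothesis Jac_pos : forall s y, 0 <= s <= T -> inOmega y -> 0 < Jac theta s y.
Hypothesis equation : forall s y c, 0 <= s <= T -> inOmega y -> (c < 3)%nat ->
  euler_equation gamma delta theta s (Lam_of A tt s) (Gam_of A tt s) (mu_of A tt s)
    (Derive (mu_of A tt) s / mu_of A tt s) y c.

Variables (y : pt) (i j : nat).
Hypothesis y_in : inOmega y.
Hypothesis i_lt : (i < 3)%nat.
Hypothesis j_lt : (j < 3)%nat.

Local Notation mu := (mu_of A tt).
Local Notation curl r F := (curlLA (Lam_of A tt r) (Acal theta r) F y i j).
Local Notation comm F r := (commLA (Lam_of A tt) (Acal theta) F r y i j).
Local Notation GV := (GamV (Gam_of A tt) (Vel theta)).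

Lemma C1_Acal r q m : 0 <= r <= T -> (q < 3)%nat -> (m < 3)%nat -> C1 (fun r' => Acal theta r' y q m) r.
Proof.
  intros Hr Hq Hm. apply (C1_inv3 (fun r' => Deta theta r' y)); auto.
  - intros p q' Hp Hq'. apply C1_plus; [apply C1_const|].
    apply (C1_pdy (- eps) (T + eps)); auto. lra.
  - apply Rgt_not_eq, Jac_pos; auto.
Qed.

Lemma C1_Lam r c m : 0 <= r <= T -> (c < 3)%nat -> (m < 3)%nat -> C1 (fun r' => Lam_of A tt r' c m) r.
Proof. intros Hr Hc Hm. apply (C1_Lam_of A dA eps0 tau tt T eps); auto. lra. Qed.

Lemma C1_Lam_Acal r c m q : 0 <= r <= T -> (c < 3)%nat -> (m < 3)%nat -> (q < 3)%nat ->
  C1 (fun r' => Lam_of A tt r' c m * Acal theta r' y q m) r.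
Proof. intros; apply C1_mult; [apply C1_Lam | apply C1_Acal]; auto. Qed.

Lemma is_derive_curl_theta r : 0 <= r <= T ->
  is_derive (fun r' => curl r' (theta r')) r (comm theta r + curl r (Vel theta r)).
Proof.
  intros Hr. apply (is_derive_curlLA (- eps) (T + eps)); auto; [lra|].
  intros; apply C1_ex_derive, C1_Lam_Acal; auto.
Qed.

Lemma is_derive_curl_Vel r : 0 <= r <= T ->
  is_derive (fun r' => curl r' (Vel theta r')) r
    (comm (Vel theta) r - Derive mu r / mu r * curl r (Vel theta r) - 2 * curl r (GV r)).
Proof.
  intros Hr. assert (Hr' : - eps < r < T + eps) by lra.
  assert (Z : curlLA (Lam_of A tt r) (Acal theta r)
                (inertia theta r (Gam_of A tt r) (Derive mu r / mu r)) y i j = 0).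
  { apply (curlLA_inertia gamma delta (- eps) (T + eps) theta r) with (m := mu r); auto. }
  rewrite (curlLA_inertia_expand (- eps) (T + eps)) in Z by auto.
  eapply is_derive_replace.
  - apply (is_derive_curlLA (- eps) (T + eps)); auto; [apply smooth_field_Vel; auto|].
    intros; apply C1_ex_derive, C1_Lam_Acal; auto.
  - change (fun z c => sum3 (fun l => Gam_of A tt r c l * Vel theta r z l)) with (GV r) in Z. lra.
Qed.

Lemma continuous_comm F r : smooth_field (- eps) (T + eps) F -> 0 <= r <= T -> continuous (fun r' => comm F r') r.
Proof.
  intros HF Hr. apply (continuous_commLA (- eps) (T + eps)); auto; [lra|].
  intros; apply C1_Lam_Acal; auto.
Qed.

Lemma continuous_curl_GamV r : 0 <= r <= T -> continuous (fun r' => curl r' (GV r')) r.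
Proof.
  intros Hr. assert (Hr' : - eps < r < T + eps) by lra.
  assert (HVel := smooth_field_Vel _ _ _ theta_smooth).
  assert (CP : forall k l, (k < 3)%nat -> (l < 3)%nat ->
                 continuous (fun r' => pdy k (fun z => Vel theta r' z l) y) r).
  { intros k l Hk Hl. apply C1_continuous, (C1_pdy (- eps) (T + eps)); auto. }
  apply (continuous_ext_loc _ (fun r' =>
      sum3 (fun m => Lam_of A tt r' j m * sum3 (fun k => Acal theta r' y k m
                       * sum3 (fun l => Gam_of A tt r' i l * pdy k (fun z => Vel theta r' z l) y)))
    - sum3 (fun m => Lam_of A tt r' i m * sum3 (fun k => Acal theta r' y k m
                       * sum3 (fun l => Gam_of A tt r' j l * pdy k (fun z => Vel theta r' z l) y))))).
  { eapply filter_imp; [|exact (locally_interval _ _ r Hr')]. intros r' Hr''. unfold curlLA.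
    f_equal; apply sum3_ext; intros m Hm; f_equal; apply sum3_ext; intros k Hk; f_equal;
      symmetry; apply (pdy_sum3_field (- eps) (T + eps)); auto. }
  assert (CL : forall c m, (c < 3)%nat -> (m < 3)%nat -> continuous (fun r' => Lam_of A tt r' c m) r)
    by (intros; apply C1_continuous, C1_Lam; auto).
  assert (CA : forall k m, (k < 3)%nat -> (m < 3)%nat -> continuous (fun r' => Acal theta r' y k m) r)
    by (intros; apply C1_continuous, C1_Acal; auto).
  assert (CG : forall c l, (c < 3)%nat -> (l < 3)%nat -> continuous (fun r' => Gam_of A tt r' c l) r)
    by (intros; apply (continuous_Gam_of A dA eps0 tau tt T eps); auto).
  apply continuous_Rminus; apply continuous_sum3; intros m Hm; apply continuous_Rmult; auto;
    apply continuous_sum3; intros k Hk; apply continuous_Rmult; auto;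
    apply continuous_sum3; intros l Hl; apply continuous_Rmult; auto.
Qed.

Lemma C1_mu r : 0 <= r <= T -> C1 mu r.
Proof. intros Hr. apply (C1_mu_of A dA eps0 tau tt T eps); auto. lra. Qed.

Lemma continuous_mu_comm_Vel r : 0 <= r <= T -> continuous (fun q => mu q * comm (Vel theta) q) r.
Proof.
  intros Hr. apply continuous_Rmult; [apply C1_continuous, C1_mu; auto|].
  apply continuous_comm; auto. apply smooth_field_Vel; auto.
Qed.

Lemma continuous_mu_curl_GamV r : 0 <= r <= T -> continuous (fun q => mu q * curl q (GV q)) r.
Proof. intros Hr. apply continuous_Rmult; [apply C1_continuous, C1_mu | apply continuous_curl_GamV]; auto. Qed.

Lemma curl_Vel_formula s : 0 <= s <= T ->
  curl s (Vel theta s) =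
    mu 0 * curl 0 (Vel theta 0) / mu s
    + / mu s * RInt (fun r => mu r * comm (Vel theta) r) 0 s
    - 2 / mu s * RInt (fun r => mu r * curl r (GV r)) 0 s.
Proof.
  intros Hs.
  rewrite (integrating_factor mu (Derive mu) (fun r => curl r (Vel theta r))
             (fun r => comm (Vel theta) r - 2 * curl r (GV r)) s); [| lra | | |].
  - assert (I : is_RInt (fun q => mu q * (comm (Vel theta) q - 2 * curl q (GV q))) 0 s
                  (RInt (fun q => mu q * comm (Vel theta) q) 0 s - 2 * RInt (fun q => mu q * curl q (GV q)) 0 s)).
    { apply (is_RInt_ext_open (fun q => mu q * comm (Vel theta) q - 2 * (mu q * curl q (GV q)))); [lra | intros x Hx; cbv beta; ring |].
      apply is_RInt_Rminus; [|apply is_RInt_Rscal]; apply is_RInt_continuous; try lra;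
        intros; [apply continuous_mu_comm_Vel | apply continuous_mu_curl_GamV]; lra. }
    rewrite (is_RInt_unique _ _ _ _ I). pose proof (mu_of_pos A tt s). field. lra.
  - intros r Hr. split; [apply mu_of_pos | apply C1_is_derive, C1_mu; lra].
  - intros r Hr. eapply is_derive_replace; [apply is_derive_curl_Vel; lra | ring].
  - intros r Hr. apply continuous_Rmult; [apply C1_continuous, C1_mu; lra|].
    apply continuous_Rminus; [apply continuous_comm; [apply smooth_field_Vel; auto | lra]|].
    apply continuous_Rmult; [apply continuous_const | apply continuous_curl_GamV; lra].
Qed.

Lemma curl_theta_formula s : 0 <= s <= T ->
  curl s (theta s) =
    curl 0 (theta 0)
    + mu 0 * curl 0 (Vel theta 0) * RInt (fun r => / mu r) 0 s
    + RInt (fun r => comm theta r) 0 s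
    + RInt (fun r => / mu r * RInt (fun q => mu q * comm (Vel theta) q) 0 r) 0 s
    - RInt (fun r => 2 / mu r * RInt (fun q => mu q * curl q (GV q)) 0 r) 0 s.
Proof.
  intros Hs.
  assert (Cinv : forall r, 0 <= r <= T -> continuous (fun q => / mu q) r).
  { intros r Hr. apply continuous_Rinv; [apply C1_continuous, C1_mu; auto | apply Rgt_not_eq, mu_of_pos]. }
  assert (Ccomm : forall r, 0 <= r <= T -> continuous (fun q => comm theta q) r)
    by (intros; apply continuous_comm; auto).
  assert (J1 : is_RInt (fun r => comm theta r + curl r (Vel theta r)) 0 s (curl s (theta s) - curl 0 (theta 0))).
  { apply (is_RInt_derive_R (fun r => curl r (theta r))); [lra | intros; apply is_derive_curl_theta; lra|].
    intros x Hx. apply continuous_Rplus; [apply Ccomm; lra|].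
    apply ex_derive_continuous_R. eexists. apply is_derive_curl_Vel. lra. }
  assert (J2 : is_RInt (fun r => comm theta r + curl r (Vel theta r)) 0 s
     (RInt (fun r => comm theta r) 0 s
      + (mu 0 * curl 0 (Vel theta 0) * RInt (fun r => / mu r) 0 s
         + RInt (fun r => / mu r * RInt (fun q => mu q * comm (Vel theta) q) 0 r) 0 s
         - RInt (fun r => 2 / mu r * RInt (fun q => mu q * curl q (GV q)) 0 r) 0 s))).
  { apply is_RInt_Rplus; [apply is_RInt_continuous; [lra | intros; apply Ccomm; lra]|].
    apply (is_RInt_ext_open (fun r => mu 0 * curl 0 (Vel theta 0) * / mu r
       + / mu r * RInt (fun q => mu q * comm (Vel theta) q) 0 r
       - 2 / mu r * RInt (fun q => mu q * curl q (GV q)) 0 r)); [lra | |].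
    { intros x Hx. rewrite (curl_Vel_formula x) by lra. unfold Rdiv. ring. }
    apply is_RInt_Rminus; [apply is_RInt_Rplus|].
    - apply is_RInt_Rscal, is_RInt_continuous; [lra | intros; apply Cinv; lra].
    - apply (RInt_correct (V := R_CompleteNormedModule)), ex_RInt_mult_primitive; [lra | |];
        intros; [apply continuous_mu_comm_Vel | apply Cinv]; lra.
    - apply (RInt_correct (V := R_CompleteNormedModule)), ex_RInt_mult_primitive; [lra | |];
        intros; [apply continuous_mu_curl_GamV; lra|].
      apply continuous_Rmult; [apply continuous_const | apply Cinv; lra]. }
  assert (E := is_RInt_unique _ _ _ _ J1). rewrite (is_RInt_unique _ _ _ _ J2) in E. lra.
Qed.

End CurlFormulas.

Theorem lemma3p1
  (gamma delta : R) (A0 A1 : mat)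
  (A dA : R -> mat) (eps0 : R) (tau tt : R -> R)
  (T eps : R) (theta : R -> pt -> vec) :
  1 < gamma -> 0 < delta -> 0 < det3 A0 -> 0 < eps0 ->
  (* A solves A'' = delta (det A)^{1-gamma} A^{-T}, A(0)=A0, A'(0)=A1, A in GL+(3) *)
  (forall i j, (i < 3)%nat -> (j < 3)%nat -> A 0 i j = A0 i j /\ dA 0 i j = A1 i j) ->
  (forall t, - eps0 < t -> 0 < det3 (A t)) ->
  (forall t i j, - eps0 < t -> (i < 3)%nat -> (j < 3)%nat ->
     is_derive (fun r => A r i j) t (dA t i j)) ->
  (forall t i j, - eps0 < t -> (i < 3)%nat -> (j < 3)%nat ->
     is_derive (fun r => dA r i j) t
       (delta * Rpower (det3 (A t)) (1 - gamma) * inv3 (A t) j i)) ->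
  (* tau(t): d tau/dt = 1/mu, tau(0) = 0; tt = t as a function of tau *)
  tau 0 = 0 ->
  (forall t, - eps0 < t -> is_derive tau t (/ Rpower (det3 (A t)) (1/3))) ->
  0 < T -> 0 < eps ->
  (forall s, - eps < s < T + eps -> - eps0 < tt s /\ tau (tt s) = s) ->
  (* theta is smooth *)
  (forall i, (i < 3)%nat ->
     smooth_on (fun s y => - eps < s < T + eps /\ inOmega y) (fun s y => theta s y i)) ->
  (forall s y, 0 <= s <= T -> inOmega y -> 0 < Jac theta s y) ->
  (* the equation *)
  (forall s y i, 0 <= s <= T -> inOmega y -> (i < 3)%nat ->
     let mu := mu_of A tt in
     let Lam := Lam_of A tt in
     let Gam := Gam_of A tt in
     let V := Vel theta in
     let al := alpha gamma in
     Rpower (wfun gamma delta y) al * Rpower (mu s) (3 * gamma - 3) *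
       (Derive (fun r => V r y i) s + Derive mu s / mu s * V s y i
        + 2 * sum3 (fun j => Gam s i j * V s y j))
     + delta * Rpower (wfun gamma delta y) al * sum3 (fun l => Lam s i l * theta s y l)
     + sum3 (fun k => pdy k (fun z => Rpower (wfun gamma delta z) (1 + al) *
          sum3 (fun j => Lam s i j *
                  (Acal theta s z k j * Rpower (Jac theta s z) (- / al) - kron k j))) y)
     = 0) ->
  forall s y i j, 0 <= s <= T -> inOmega y -> (i < 3)%nat -> (j < 3)%nat ->
    let mu := mu_of A tt in
    let Lam := Lam_of A tt in
    let V := Vel theta in
    let GV := GamV (Gam_of A tt) V in
    let Ac := Acal theta in
    let curl := fun (r : R) (F : pt -> vec) => curlLA (Lam r) (Ac r) F y i j in
    curl s (V s) =
      mu 0 * curl 0 (V 0) / mu s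
      + / mu s * RInt (fun r => mu r * commLA Lam Ac V r y i j) 0 s
      - 2 / mu s * RInt (fun r => mu r * curl r (GV r)) 0 s
    /\
    curl s (theta s) =
      curl 0 (theta 0)
      + mu 0 * curl 0 (V 0) * RInt (fun r => / mu r) 0 s
      + RInt (fun r => commLA Lam Ac theta r y i j) 0 s
      + RInt (fun r => / mu r * RInt (fun q => mu q * commLA Lam Ac V q y i j) 0 r) 0 s
      - RInt (fun r => 2 / mu r * RInt (fun q => mu q * curl q (GV q)) 0 r) 0 s.
Proof.
  intros Hg Hd _ _ _ HdetA HAd HdAd _ Htau _ He Htt Hsm HJ Heq s y i j Hs Hy Hi Hj. cbv zeta.
  assert (HdA : forall t i j, - eps0 < t -> (i < 3)%nat -> (j < 3)%nat -> ex_derive (fun r => dA r i j) t)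
    by (intros; eexists; apply HdAd; auto).
  split.
  - apply (curl_Vel_formula gamma delta A dA eps0 tau tt T eps theta); auto.
  - apply (curl_theta_formula gamma delta A dA eps0 tau tt T eps theta); auto.
Qed.
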